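(* Let $\widehat{G}$ be a subgroup of $\widehat{\operatorname{PC}^{\bowtie}}$ containing ${\mathfrak S}_{\mathrm{fin}}$ and such that its image $G$ in $\operatorname{PC}^{\bowtie}=\widehat{\operatorname{PC}^{\bowtie}}/{\mathfrak S}_{\mathrm{fin}}$ is a nonabelian simple group. If there exists an element of order $3$ in $\widehat{G}\smallsetminus{\mathfrak S}_{\mathrm{fin}}$, then $J_3(\widehat{G})=\operatorname{Ker}(\varepsilon|_{\widehat G})=D(\widehat{G})$.
   Context: $X=[0,1[$. $\widehat{\operatorname{PC}^{\bowtie}}$ is the group of bijections $X\to X$ continuous outside a finite subset; ${\mathfrak S}_{\mathrm{fin}}$ is its normal subgroup of finitely supported permutations, with classical signature $\operatorname{sgn}$ valued in $\mathbb{Z}/2\mathbb{Z}$. For a group $H$, $J_3(H)$ is the subgroup generated by the elements of order $3$ and $D(H)$ is the derived subgroup. The homomorphism $\varepsilon:\widehat{\operatorname{PC}^{\bowtie}}\to\mathbb{Z}/2\mathbb{Z}$ is defined as follows. For $h\in\widehat{\operatorname{PC}^{\bowtie}}$, a partition associated with $h$ is a finite partition $\mathcal P=\{I_1,\dots,I_n\}$ of $X$ into intervals $I_j=[\alpha_j,b_j[$ such that $h$ is continuous on $I_j^\circ=]\alpha_j,b_j[$ for each $j$ (so $h$ is strictly monotone there and $h(I_j^\circ)$ is an open interval). Let $\beta_j$ be the left endpoint of $h(I_j^\circ)$; $\{h(\alpha_j)\}=\{\beta_j\}$, and $\sigma_{(h,\mathcal P)}\in{\mathfrak S}_{\mathrm{fin}}$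 sends $h(\alpha_j)$ to $\beta_j$ for each $j$ and fixes all other points. $R(h,\mathcal P)$ is the number of $j$ with $h$ decreasing on $I_j^\circ$, and $\varepsilon(h,\mathcal P)=R(h,\mathcal P)+\operatorname{sgn}(\sigma_{(h,\mathcal P)})\bmod 2$. There is a unique associated partition $\mathcal P^{\min}_h$ with the fewest intervals, and $\varepsilon(h):=\varepsilon(h,\mathcal P^{\min}_h)$; it is a group homomorphism extending $\operatorname{sgn}$. *)

From Stdlib Require Import Reals Lra Lia List Bool ClassicalEpsilon.
Import ListNotations.
Open Scope R_scope.

Definition X (x : R) : Prop := 0 <= x < 1.

Definition contX_at (h : R -> R) (x : R) : Prop :=
  forall eps, 0 < eps -> exists delta, 0 < delta /\
    forall y, X y -> Rabs (y - x) < delta -> Rabs (h y - h x) < eps.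

(** A bijection of X is represented canonically by the function
    R -> R that agrees with it on X and is the identity outside X. *)
Definition PCB (h : R -> R) : Prop :=
  (forall x, X x -> X (h x)) /\
  (forall x y, X x -> X y -> h x = h y -> x = y) /\
  (forall y, X y -> exists x, X x /\ h x = y) /\
  (forall x, ~ X x -> h x = x) /\
  (exists S : list R, forall x, X x -> ~ In x S -> contX_at h x).

Definition Sfin (h : R -> R) : Prop :=
  PCB h /\ exists l : list R, forall x, ~ In x l -> h x = x.

Definition idf : R -> R := fun x => x.
Definition comp (g h : R -> R) : R -> R := fun x => g (h x).
Definition inv_pair (g g' : R -> R) : Prop :=
  forall x, g (g' x) = x /\ g' (g x) = x.

Definition is_subgroup (K : (R -> R) -> Prop) : Prop :=
  (forall f, K f -> PCB f) /\ K idf /\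
  (forall f g, K f -> K g -> K (comp f g)) /\
  (forall f, K f -> exists f', K f' /\ inv_pair f f').

Definition normal_in (N G : (R -> R) -> Prop) : Prop :=
  is_subgroup N /\ (forall f, N f -> G f) /\
  forall g g' n, G g -> inv_pair g g' -> N n -> N (comp g (comp n g')).

Definition generated (S : (R -> R) -> Prop) (f : R -> R) : Prop :=
  forall K, is_subgroup K -> (forall g, S g -> K g) -> K f.

Definition order3 (f : R -> R) : Prop :=
  comp f (comp f f) = idf /\ f <> idf.

Definition J3 (H : (R -> R) -> Prop) : (R -> R) -> Prop :=
  generated (fun f => H f /\ order3 f).

Definition commutator_of (H : (R -> R) -> Prop) (f : R -> R) : Prop :=
  exists g g' k k', H g /\ H k /\ inv_pair g g' /\ inv_pair k k' /\
    f = comp g (comp k (comp g' k')).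

Definition D (H : (R -> R) -> Prop) : (R -> R) -> Prop :=
  generated (commutator_of H).

(** A partition {[a_j, b_j[} of X into n intervals is encoded by the list
    alphas = [a_1; ...; a_n] of left endpoints; b_j = a_{j+1}, b_n = 1. *)
Definition alpha (P : list R) (j : nat) : R := nth j P 0.
Definition bnd (P : list R) (j : nat) : R := nth (S j) P 1.

Definition assoc_partition (h : R -> R) (P : list R) : Prop :=
  (0 < length P)%nat /\ alpha P 0 = 0 /\
  (forall j, (j < length P)%nat -> alpha P j < bnd P j) /\
  (forall j, (j < length P)%nat -> forall x,
       alpha P j < x < bnd P j -> continuity_pt h x).

Definition min_assoc_partition (h : R -> R) (P : list R) : Prop :=
  assoc_partition h P /\
  forall P', assoc_partition h P' -> (length P <= length P')%nat.

Definition is_inf (E : R -> Prop) (m : R) : Prop :=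
  (forall y, E y -> m <= y) /\ (forall m', (forall y, E y -> m' <= y) -> m' <= m).

Definition img_open (h : R -> R) (P : list R) (j : nat) (y : R) : Prop :=
  exists x, alpha P j < x < bnd P j /\ y = h x.

Definition decreasing_on (h : R -> R) (a b : R) : Prop :=
  forall x y, a < x -> x < y -> y < b -> h y < h x.

Fixpoint lookup (l : list (R * R)) (x : R) : R :=
  match l with
  | nil => x
  | (a, b) :: t => if Req_dec_T x a then b else lookup t x
  end.

Definition inv_count (sigma : R -> R) (L : list R) : nat :=
  fold_right plus 0%nat
    (map (fun x => fold_right plus 0%nat
       (map (fun y => if Rlt_dec x y then
                        (if Rlt_dec (sigma y) (sigma x) then 1%nat else 0%nat)
                      else 0%nat) L)) L).

(** epsilon(h, P) = b (in Z/2Z = bool).  betas = list of the beta_j (left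
    endpoints of h(I_j°)), decs = list recording whether h decreases on I_j°.
    sigma_(h,P) sends h(alpha_j) to beta_j and fixes the other points; it
    permutes the finite set {h(alpha_j)} = {beta_j}, and its signature is the
    parity of its number of inversions on that set. *)
Definition eps_hP (h : R -> R) (P : list R) (b : bool) : Prop :=
  exists (betas : list R) (decs : list bool),
    length betas = length P /\ length decs = length P /\
    (forall j, (j < length P)%nat -> is_inf (img_open h P j) (nth j betas 0)) /\
    (forall j, (j < length P)%nat ->
        (nth j decs false = true <-> decreasing_on h (alpha P j) (bnd P j))) /\
    let L := map h P in
    let sigma := lookup (combine L betas) in
    b = xorb (Nat.odd (count_occ bool_dec decs true))
             (Nat.odd (inv_count sigma L)).

Definition eps (h : R -> R) : bool :=
  epsilon (inhabits false)
    (fun b => exists P, min_assoc_partition h P /\ eps_hP h P b).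

(* epsilon(h) is computed on any partition on whose pieces h is continuous: refining a
   piece [a, b[ at c either changes nothing (h increasing there) or adds one decreasing piece
   and one transposition (a c) to sigma.  On a partition adapted to both h and g o h, the
   pieces of h are carried onto pieces adapted to g, and the decreasing pieces and the
   signatures add up, so epsilon is a homomorphism; it is odd on transpositions.
   If H is a normal subgroup of Gh inside Ker epsilon containing the 3-cycles and some
   element outside S_fin, then H S_fin is a normal subgroup strictly above S_fin, hence
   equal to Gh by simplicity of G.  An element of Ker epsilon is then k s with k in H and
   s an even finite permutation, a product of pairs of transpositions, each a product of
   3-cycles; so H = Ker epsilon.  J_3(Gh) and D(Gh) both qualify: a 3-cycle has order 3
   and is the square of the commutator [(a b), (b c)], and both groups contain an element
   outside S_fin by hypothesis. *)

From Stdlib Require Import Reals Lra Lia List Bool Arith Permutation Sorting Mergesort Orders.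
From Stdlib Require Import Classical ClassicalEpsilon FunctionalExtensionality.
Import ListNotations.
Open Scope R_scope.

(** * Parity of inversions *)

Definition Rltb (a b : R) : bool := if Rlt_dec a b then true else false.

Lemma Rltb_antisym a b : a <> b -> Rltb b a = negb (Rltb a b).
Proof. intros H; unfold Rltb; destruct (Rlt_dec b a), (Rlt_dec a b); simpl; auto; lra. Qed.

Lemma Rltb_irrefl a : Rltb a a = false.
Proof. unfold Rltb; destruct (Rlt_dec a a); auto; lra. Qed.

Definition xor_sum {A} (l : list A) (f : A -> bool) : bool :=
  fold_right (fun x acc => xorb (f x) acc) false l.

Lemma xor_sum_cons {A} (a : A) l f : xor_sum (a :: l) f = xorb (f a) (xor_sum l f).
Proof. reflexivity. Qed.

Lemma xor_sum_perm {A} (l l' : list A) f : Permutation l l' -> xor_sum l f = xor_sum l' f.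
Proof.
  induction 1; simpl; try congruence.
  rewrite <- !xorb_assoc, (xorb_comm (f y)); auto.
Qed.

Lemma xor_sum_ext {A} (l : list A) f g :
  (forall x, In x l -> f x = g x) -> xor_sum l f = xor_sum l g.
Proof. induction l; simpl; intros H; auto. rewrite H, IHl; auto. Qed.

Lemma xor_sum_xorb {A} (l : list A) f g :
  xor_sum l (fun x => xorb (f x) (g x)) = xorb (xor_sum l f) (xor_sum l g).
Proof.
  induction l; simpl; auto. rewrite IHl.
  destruct (f a), (g a), (xor_sum l f), (xor_sum l g); reflexivity.
Qed.

Lemma xor_sum_false {A} (l : list A) : xor_sum l (fun _ => false) = false.
Proof. induction l; simpl; auto. Qed.

Lemma xor_sum_map {A B} (l : list A) (p : A -> B) f :
  xor_sum (map p l) f = xor_sum l (fun x => f (p x)).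
Proof. induction l; simpl; auto. rewrite IHl; auto. Qed.

Lemma xor_sum_update {A} (C : list A) a f g : NoDup C -> In a C ->
  (forall x, In x C -> x <> a -> f x = g x) ->
  xor_sum C f = xorb (xorb (f a) (g a)) (xor_sum C g).
Proof.
  intros ND Ha Hfg. destruct (in_split _ _ Ha) as [l1 [l2 ->]].
  rewrite !(xor_sum_perm _ _ _ (Permutation_sym (Permutation_middle l1 l2 a))). simpl.
  apply NoDup_remove_2 in ND.
  rewrite (xor_sum_ext _ f g).
  - destruct (f a), (g a), (xor_sum _ g); reflexivity.
  - intros x Hx. apply Hfg; [apply in_or_app; apply in_app_or in Hx; simpl; tauto|].
    intros ->; contradiction.
Qed.

Lemma odd_sum_map {A} (l : list A) (f : A -> nat) :
  Nat.odd (fold_right plus 0%nat (map f l)) = xor_sum l (fun x => Nat.odd (f x)).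
Proof. induction l; simpl; auto. rewrite Nat.odd_add, IHl; auto. Qed.

Lemma odd_count_occ_true (l : list bool) :
  Nat.odd (count_occ bool_dec l true) = xor_sum l (fun b => b).
Proof.
  induction l as [|[|] l IH]; simpl; auto.
  rewrite Nat.odd_succ, <- Nat.negb_odd, IH. destruct (xor_sum l _); auto.
Qed.

Definition xor_sum2 {A} (l : list A) (f : A -> A -> bool) : bool :=
  xor_sum l (fun x => xor_sum l (f x)).

Lemma xor_sum2_cons {A} (a : A) l f :
  xor_sum2 (a :: l) f =
  xorb (f a a) (xorb (xor_sum l (fun y => xorb (f a y) (f y a))) (xor_sum2 l f)).
Proof.
  unfold xor_sum2; simpl. rewrite !xor_sum_xorb.
  destruct (f a a), (xor_sum l (f a)), (xor_sum l (fun x => f x a)),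
    (xor_sum l (fun x => xor_sum l (f x))); reflexivity.
Qed.

Lemma xor_sum2_perm {A} (l l' : list A) f : Permutation l l' -> xor_sum2 l f = xor_sum2 l' f.
Proof.
  intros H. unfold xor_sum2. rewrite (xor_sum_perm _ _ _ H).
  apply xor_sum_ext. intros; apply xor_sum_perm; auto.
Qed.

Lemma xor_sum2_map {A B} (l : list A) (p : A -> B) f :
  xor_sum2 (map p l) f = xor_sum2 l (fun x y => f (p x) (p y)).
Proof. unfold xor_sum2. rewrite xor_sum_map. apply xor_sum_ext; intros. apply xor_sum_map. Qed.

Lemma xor_sum2_ext {A} (l : list A) f g :
  (forall x y, In x l -> In y l -> f x y = g x y) -> xor_sum2 l f = xor_sum2 l g.
Proof. intros H; unfold xor_sum2; apply xor_sum_ext; intros; apply xor_sum_ext; auto. Qed.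

Lemma xor_sum2_xorb {A} (l : list A) f g :
  xor_sum2 l (fun x y => xorb (f x y) (g x y)) = xorb (xor_sum2 l f) (xor_sum2 l g).
Proof. unfold xor_sum2. rewrite <- xor_sum_xorb. apply xor_sum_ext; intros. apply xor_sum_xorb. Qed.

(* The off-diagonal terms cancel in pairs. *)
Lemma xor_sum2_symmetric {A} (l : list A) f :
  (forall x, In x l -> f x x = false) ->
  (forall x y, In x l -> In y l -> f x y = f y x) -> xor_sum2 l f = false.
Proof.
  induction l; intros Hdiag Hsym; auto.
  rewrite xor_sum2_cons, Hdiag by (left; auto).
  rewrite IHl by (intros; first [apply Hdiag | apply Hsym]; right; auto).
  rewrite (xor_sum_ext _ _ (fun _ => false)), xor_sum_false; auto.
  intros y Hy. rewrite Hsym by (simpl; auto). destruct (f y a); auto.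
Qed.

(* When [p] is injective on [C] and [q(C) = p(C)], this is the signature of the
   permutation [p x |-> q x] of [p(C)]. *)
Definition inv_parity (p q : R -> R) (C : list R) : bool :=
  xor_sum2 C (fun x y => Rltb (p x) (p y) && Rltb (q y) (q x)).

Definition inj_list (p : R -> R) (C : list R) : Prop :=
  forall x y, In x C -> In y C -> p x = p y -> x = y.

Lemma inv_parity_ext p p' q q' C :
  (forall x, In x C -> p x = p' x) -> (forall x, In x C -> q x = q' x) ->
  inv_parity p q C = inv_parity p' q' C.
Proof.
  intros Hp Hq. apply xor_sum2_ext. intros x y Hx Hy.
  rewrite (Hp x), (Hp y), (Hq x), (Hq y); auto.
Qed.

Lemma inv_parity_trans p q r C : inj_list p C -> inj_list q C -> inj_list r C ->
  inv_parity p r C = xorb (inv_parity p q C) (inv_parity q r C).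
Proof.
  intros Hp Hq Hr. unfold inv_parity.
  (* The inversion indicators of (p, r), (p, q) and (q, r) add up to a symmetric function. *)
  assert (Hcancel : xor_sum2 C (fun x y =>
     xorb (Rltb (p x) (p y) && Rltb (r y) (r x))
       (xorb (Rltb (p x) (p y) && Rltb (q y) (q x)) (Rltb (q x) (q y) && Rltb (r y) (r x))))
     = false).
  { apply xor_sum2_symmetric.
    - intros; rewrite !Rltb_irrefl; simpl. destruct (Rltb (q x) (q x)); reflexivity.
    - intros x y Hx Hy. destruct (Req_dec x y) as [->|Hxy]; auto.
      assert (p x <> p y) by (intro E; apply Hxy, Hp; auto).
      assert (q x <> q y) by (intro E; apply Hxy, Hq; auto).
      assert (r x <> r y) by (intro E; apply Hxy, Hr; auto).
      rewrite (Rltb_antisym (p x) (p y)), (Rltb_antisym (q x) (q y)), (Rltb_antisym (r x) (r y))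
        by auto.
      destruct (Rltb (p x) (p y)), (Rltb (q x) (q y)), (Rltb (r x) (r y)); reflexivity. }
  rewrite !xor_sum2_xorb in Hcancel.
  destruct (xor_sum2 C (fun x y => Rltb (p x) (p y) && Rltb (r y) (r x))),
    (xor_sum2 C (fun x y => Rltb (p x) (p y) && Rltb (q y) (q x))),
    (xor_sum2 C (fun x y => Rltb (q x) (q y) && Rltb (r y) (r x))); simpl in *; auto.
Qed.

Lemma inv_parity_refl p C : inv_parity p p C = false.
Proof.
  unfold inv_parity. rewrite (xor_sum2_ext _ _ (fun _ _ => false)).
  - apply xor_sum2_symmetric; auto.
  - intros. unfold Rltb. destruct (Rlt_dec (p x) (p y)), (Rlt_dec (p y) (p x)); auto; lra.
Qed.

Lemma inv_parity_sym p q C : inj_list p C -> inj_list q C -> inv_parity p q C = inv_parity q p C.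
Proof.
  intros Hp Hq. pose proof (inv_parity_trans p q p C Hp Hq Hp) as E.
  rewrite inv_parity_refl in E. destruct (inv_parity p q C), (inv_parity q p C); simpl in *; auto.
Qed.

Lemma inv_parity_reindex p q g C :
  Permutation (map p C) (map q C) ->
  inv_parity p (fun x => g (p x)) C = inv_parity q (fun x => g (q x)) C.
Proof.
  intros H. unfold inv_parity.
  rewrite <- (xor_sum2_map C p (fun u v => Rltb u v && Rltb (g v) (g u))).
  rewrite <- (xor_sum2_map C q (fun u v => Rltb u v && Rltb (g v) (g u))).
  apply xor_sum2_perm; auto.
Qed.

Lemma inj_list_comp g p C : inj_list p C -> inj_list g (map p C) ->
  inj_list (fun x => g (p x)) C.
Proof. intros Hp Hg x y Hx Hy E. apply Hp, Hg; auto; apply in_map; auto. Qed.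

Lemma NoDup_map_inj_list (f : R -> R) l : NoDup l -> inj_list f l -> NoDup (map f l).
Proof.
  induction l; simpl; intros ND Hi; constructor; inversion ND; subst.
  - intro Hin. apply in_map_iff in Hin as [y [Ey Hy]].
    assert (y = a) by (apply Hi; simpl; auto). subst; contradiction.
  - apply IHl; auto. intros x y Hx Hy; apply Hi; simpl; auto.
Qed.

Lemma inv_parity_comp g p q C :
  Permutation (map p C) (map q C) -> inj_list p C -> inj_list q C -> inj_list g (map p C) ->
  inv_parity (fun x => g (p x)) (fun x => g (q x)) C = inv_parity p q C.
Proof.
  intros HP Hp Hq Hg.
  assert (Hg' : inj_list g (map q C)).
  { intros u v Hu Hv; apply Hg; apply (Permutation_in _ (Permutation_sym HP)); auto. }
  pose proof (inj_list_comp g p C Hp Hg) as Hgp.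
  pose proof (inj_list_comp g q C Hq Hg') as Hgq.
  rewrite (inv_parity_trans _ q _ C Hgp Hq Hgq), (inv_parity_trans _ p q C Hgp Hp Hq).
  rewrite (inv_parity_sym _ p C Hgp Hp), (inv_parity_reindex p q g C HP).
  destruct (inv_parity q (fun x => g (q x)) C), (inv_parity p q C); reflexivity.
Qed.

Lemma inv_parity_cons_fixed p q c C :
  p c = q c -> Permutation (map p C) (map q C) -> inj_list p (c :: C) -> inj_list q (c :: C) ->
  inv_parity p q (c :: C) = inv_parity p q C.
Proof.
  intros E HP Hp Hq. unfold inv_parity. rewrite xor_sum2_cons, Rltb_irrefl. simpl.
  rewrite (xor_sum_ext _ _ (fun y => xorb (Rltb (p c) (p y)) (Rltb (q c) (q y)))).
  - rewrite xor_sum_xorb, <- (xor_sum_map C p (Rltb (p c))), <- (xor_sum_map C q (Rltb (q c))).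
    rewrite E, (xor_sum_perm _ _ _ HP). destruct (xor_sum (map q C) _); reflexivity.
  - intros y Hy. destruct (Req_dec y c) as [->|Hyc].
    { rewrite E, !Rltb_irrefl; reflexivity. }
    assert (p c <> p y) by (intro F; apply Hyc; symmetry; apply Hp; simpl; auto).
    assert (q c <> q y) by (intro F; apply Hyc; symmetry; apply Hq; simpl; auto).
    rewrite (Rltb_antisym (p c) (p y)), (Rltb_antisym (q c) (q y)) by auto.
    rewrite <- E. destruct (Rltb (p c) (p y)), (Rltb (p c) (q y)); reflexivity.
Qed.

Definition swap (a c x : R) : R :=
  if Req_dec_T x a then c else if Req_dec_T x c then a else x.

Lemma swap_l a c : swap a c a = c.
Proof. unfold swap; destruct (Req_dec_T a a); congruence. Qed.

Lemma swap_r a c : swap a c c = a.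
Proof. unfold swap; destruct (Req_dec_T c a), (Req_dec_T c c); congruence. Qed.

Lemma swap_other a c x : x <> a -> x <> c -> swap a c x = x.
Proof. intros; unfold swap; destruct (Req_dec_T x a), (Req_dec_T x c); congruence. Qed.

Lemma swap_involutive a c x : swap a c (swap a c x) = x.
Proof.
  unfold swap. destruct (Req_dec_T x a) as [->|Hxa]; [|destruct (Req_dec_T x c) as [->|Hxc]];
    repeat destruct Req_dec_T; congruence.
Qed.

Lemma swap_In (K : list R) a c x : In a K -> In c K -> In x K -> In (swap a c x) K.
Proof. intros. unfold swap. destruct (Req_dec_T x a), (Req_dec_T x c); auto. Qed.

Lemma swap_comm a b : swap a b = swap b a.
Proof.
  apply functional_extensionality; intros x. unfold swap.
  destruct (Req_dec_T x a), (Req_dec_T x b); subst; auto.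
Qed.

Lemma inj_list_swap f K a c : inj_list f K -> In a K -> In c K ->
  inj_list (fun x => f (swap a c x)) K.
Proof.
  intros Hf Ha Hc x y Hx Hy E.
  rewrite <- (swap_involutive a c x), <- (swap_involutive a c y).
  f_equal. apply Hf; auto; apply swap_In; auto.
Qed.

Lemma Permutation_two_front (K : list R) a c : NoDup K -> In a K -> In c K -> a <> c ->
  exists K0, Permutation K (a :: c :: K0) /\ NoDup (a :: c :: K0).
Proof.
  intros ND Ha Hc Hac.
  destruct (in_split _ _ Ha) as [l1 [l2 ->]].
  assert (Hc' : In c (l1 ++ l2)).
  { apply in_app_or in Hc; apply in_or_app; destruct Hc as [H|[H|H]]; auto; congruence. }
  destruct (in_split _ _ Hc') as [m1 [m2 Em]].
  assert (P : Permutation (l1 ++ a :: l2) (a :: c :: m1 ++ m2)).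
  { rewrite <- Permutation_middle. constructor. rewrite Em, <- Permutation_middle. reflexivity. }
  exists (m1 ++ m2). split; auto. eapply Permutation_NoDup; eauto.
Qed.

Lemma xor_sum2_swap (K : list R) a c F : NoDup K -> In a K -> In c K ->
  xor_sum2 K (fun x y => F (swap a c x) (swap a c y)) = xor_sum2 K F.
Proof.
  intros ND Ha Hc.
  destruct (Req_dec a c) as [->|Hac].
  { apply xor_sum2_ext; intros x y _ _. unfold swap.
    destruct (Req_dec_T x c), (Req_dec_T y c); subst; auto. }
  destruct (Permutation_two_front K a c ND Ha Hc Hac) as [K0 [HP ND']].
  rewrite <- (xor_sum2_map K (swap a c) F). apply xor_sum2_perm.
  rewrite HP. simpl. rewrite swap_l, swap_r.
  inversion ND' as [|? ? Ha0 ND'']; subst. inversion ND''; subst. simpl in Ha0.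
  rewrite (map_ext_in (swap a c) (fun x => x)), map_id.
  - apply perm_swap.
  - intros x Hx. apply swap_other; intro; subst; auto.
Qed.

Lemma inv_parity_swap (K : list R) p a c : NoDup K -> In a K -> In c K -> a <> c -> inj_list p K ->
  inv_parity p (fun x => p (swap a c x)) K = true.
Proof.
  intros ND Ha Hc Hac Hp.
  destruct (Permutation_two_front K a c ND Ha Hc Hac) as [K0 [HP ND']].
  assert (Hp' : inj_list p (a :: c :: K0)).
  { intros x y Hx Hy; apply Hp; apply (Permutation_in _ (Permutation_sym HP)); auto. }
  unfold inv_parity. rewrite (xor_sum2_perm _ _ _ HP).
  inversion ND' as [|? ? Ha0 ND'']; subst. inversion ND'' as [|? ? Hc0 _]; subst. simpl in Ha0.
  assert (Hpac : p a <> p c) by (intro E; apply Hac; apply Hp'; simpl; auto).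
  assert (Hpy : forall y, In y K0 -> p a <> p y /\ p c <> p y).
  { intros y Hy; split; intro E; [assert (a = y) | assert (c = y)];
      try (apply Hp'; simpl; auto); subst; auto. }
  (* Each y of K0 with p y strictly between p a and p c is inverted twice, once with a and
     once with c; the pair (a, c) itself is inverted once. *)
  rewrite !xor_sum2_cons, swap_l, swap_r, !Rltb_irrefl. simpl.
  rewrite (xor_sum2_ext K0 _ (fun _ _ => false)), (xor_sum2_symmetric K0 (fun _ _ => false)); auto.
  2:{ intros x y Hx Hy. rewrite !swap_other by (intro; subst; auto).
      unfold Rltb. destruct (Rlt_dec (p x) (p y)), (Rlt_dec (p y) (p x)); auto; lra. }
  rewrite (xor_sum_ext K0 (fun y => xorb (Rltb (p a) (p y) && Rltb (p (swap a c y)) (p c))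
                                         (Rltb (p y) (p a) && Rltb (p c) (p (swap a c y))))
              (fun y => xorb (Rltb (p c) (p y) && Rltb (p (swap a c y)) (p a))
                             (Rltb (p y) (p c) && Rltb (p a) (p (swap a c y))))).
  - rewrite ?swap_r, ?Rltb_irrefl, ?(Rltb_antisym (p a) (p c)) by auto.
    destruct (Rltb (p a) (p c)), (xor_sum K0 _); reflexivity.
  - intros y Hy. destruct (Hpy y Hy). rewrite swap_other by (intro; subst; auto).
    rewrite (Rltb_antisym (p a) (p y)), (Rltb_antisym (p c) (p y)) by auto.
    destruct (Rltb (p a) (p y)), (Rltb (p c) (p y)); reflexivity.
Qed.

(** * Monotone pieces *)

Definition img (h : R -> R) (a b : R) (y : R) : Prop := exists x, a < x < b /\ y = h x.
(* beta_j of the paper; an arbitrary value when the infimum does not exist. *)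
Definition beta (h : R -> R) (a b : R) : R := epsilon (inhabits 0) (is_inf (img h a b)).
Definition cont_on (h : R -> R) (a b : R) : Prop := forall x, a < x < b -> continuity_pt h x.
Definition inj_on (h : R -> R) (a b : R) : Prop :=
  forall x y, a < x < b -> a < y < b -> h x = h y -> x = y.
Definition increasing_on (h : R -> R) (a b : R) : Prop :=
  forall x y, a < x -> x < y -> y < b -> h x < h y.

Lemma is_inf_unique E m m' : is_inf E m -> is_inf E m' -> m = m'.
Proof. intros [A B] [A' B']. apply Rle_antisym; auto. Qed.

Lemma is_inf_ext (E1 E2 : R -> Prop) m : (forall y, E1 y <-> E2 y) -> is_inf E1 m -> is_inf E2 m.
Proof.
  intros Hi [A B]. split.
  - intros y Hy. apply A, Hi; auto.
  - intros m' Hm'. apply B. intros y Hy. apply Hm', Hi; auto.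
Qed.

Lemma is_inf_exists E m0 : (exists y, E y) -> (forall y, E y -> m0 <= y) -> exists m, is_inf E m.
Proof.
  intros [y0 Hy0] Hlb.
  destruct (completeness (fun z => E (- z))) as [m [Hub Hl]].
  - exists (- m0). intros z Hz. apply Hlb in Hz. lra.
  - exists (- y0). rewrite Ropp_involutive; auto.
  - exists (- m). split.
    + intros y Hy. assert (- y <= m) by (apply Hub; rewrite Ropp_involutive; auto). lra.
    + intros m' Hm'. assert (m <= - m') by (apply Hl; intros z Hz; apply Hm' in Hz; lra). lra.
Qed.

Lemma beta_spec h a b : a < b -> (forall x, a < x < b -> 0 <= h x) ->
  is_inf (img h a b) (beta h a b).
Proof.
  intros Hab Hpos. unfold beta. apply epsilon_spec, (is_inf_exists _ 0).
  - exists (h ((a + b) / 2)), ((a + b) / 2). split; auto. lra.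
  - intros y [x [Hx ->]]. auto.
Qed.

Lemma beta_eq h a b m : a < b -> (forall x, a < x < b -> 0 <= h x) ->
  is_inf (img h a b) m -> beta h a b = m.
Proof. intros. eapply is_inf_unique; eauto. apply beta_spec; auto. Qed.

Lemma IVT_open h a b x1 x2 y : cont_on h a b -> a < x1 -> x1 < x2 -> x2 < b ->
  (h x1 < y < h x2 \/ h x2 < y < h x1) -> exists x, x1 < x < x2 /\ h x = y.
Proof.
  intros Hc H1 H2 H3 Hy.
  assert (Hcx : forall t, x1 <= t <= x2 -> continuity_pt h t) by (intros; apply Hc; lra).
  assert (Hconst : forall t, continuity_pt (fun _ => y) t)
    by (intros; apply continuity_pt_const; intros ? ?; auto).
  destruct Hy as [Hy|Hy];
    [ destruct (Ranalysis5.IVT_interv (fun t => h t - y) x1 x2) as [z [Hz Ez]]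
    | destruct (Ranalysis5.IVT_interv (fun t => y - h t) x1 x2) as [z [Hz Ez]] ];
    try (intros t Ht; apply continuity_pt_minus; auto); simpl; try lra;
    exists z; simpl in Ez; (split; [split|]); try lra;
    destruct Hz as [[Hz|Hz] [Hz'|Hz']]; subst; lra.
Qed.

Lemma IVT_between h a b x1 x2 y : cont_on h a b -> a < x1 < b -> a < x2 < b ->
  (h x1 < y < h x2 \/ h x2 < y < h x1) -> exists x, a < x < b /\ h x = y.
Proof.
  intros Hc H1 H2 Hy. destruct (Rtotal_order x1 x2) as [Hl|[->|Hg]]; [| lra |].
  - destruct (IVT_open h a b x1 x2 y) as [x [Hx Ex]]; try lra; auto. exists x; split; auto; lra.
  - destruct (IVT_open h a b x2 x1 y) as [x [Hx Ex]]; try lra; auto.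
    exists x; split; auto; lra.
Qed.

Lemma segment_between a b x y t : 0 <= t <= 1 -> a < x < b -> a < y < b -> a < x + t * (y - x) < b.
Proof.
  intros Ht Hx Hy.
  assert (0 <= t * (y - a) /\ 0 <= (1 - t) * (x - a)) by (split; apply Rmult_le_pos; lra).
  assert (0 <= t * (b - y) /\ 0 <= (1 - t) * (b - x)) by (split; apply Rmult_le_pos; lra).
  split; nra.
Qed.

(* If h reversed orientation between the pairs (x1, x2) and (y1, y2), then along the
   segment from (x1, x2) to (y1, y2) the difference h u - h v would vanish with u < v. *)
Lemma cont_inj_same_orientation h a b x1 x2 y1 y2 : cont_on h a b -> inj_on h a b ->
  a < x1 -> x1 < x2 -> x2 < b -> a < y1 -> y1 < y2 -> y2 < b ->
  h x1 < h x2 -> h y1 < h y2.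
Proof.
  intros Hc Hi H1 H2 H3 H4 H5 H6 Hx.
  destruct (Rlt_or_le (h y1) (h y2)) as [|Hy]; auto. exfalso.
  assert (Hy' : h y2 < h y1).
  { destruct (Rle_lt_or_eq_dec _ _ Hy); auto. assert (y1 = y2) by (apply Hi; auto; lra). lra. }
  set (u := fun t => x1 + t * (y1 - x1)). set (v := fun t => x2 + t * (y2 - x2)).
  assert (Hu : forall t, 0 <= t <= 1 -> a < u t < b) by (intros; apply segment_between; lra).
  assert (Hv : forall t, 0 <= t <= 1 -> a < v t < b) by (intros; apply segment_between; lra).
  assert (Huv : forall t, 0 <= t <= 1 -> u t < v t).
  { intros t Ht; unfold u, v.
    assert (0 <= t * (y2 - y1) /\ 0 <= (1 - t) * (x2 - x1)) by (split; apply Rmult_le_pos; lra).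
    nra. }
  assert (Hlin : forall x k t0, continuity_pt (fun t => x + t * k) t0)
    by (intros; apply derivable_continuous_pt; reg).
  destruct (Ranalysis5.IVT_interv (fun t => h (u t) - h (v t)) 0 1) as [t [Ht Et]].
  - intros t Ht. apply continuity_pt_minus; apply continuity_pt_comp;
      first [apply Hlin | apply Hc; auto].
  - lra.
  - unfold u, v; simpl. rewrite !Rmult_0_l, !Rplus_0_r. lra.
  - unfold u, v; simpl. rewrite !Rmult_1_l. replace (x1 + (y1 - x1)) with y1 by ring.
    replace (x2 + (y2 - x2)) with y2 by ring. lra.
  - simpl in Et. assert (u t = v t) by (apply Hi; auto; lra).
    specialize (Huv t Ht). lra.
Qed.

Lemma cont_inj_monotone h a b : a < b -> cont_on h a b -> inj_on h a b ->
  increasing_on h a b \/ decreasing_on h a b.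
Proof.
  intros Hab Hc Hi.
  set (m1 := a + (b - a) / 3). set (m2 := a + 2 * (b - a) / 3).
  assert (a < m1 < m2 /\ m2 < b) by (unfold m1, m2; lra).
  destruct (Rlt_or_le (h m1) (h m2)) as [Hl|Hle].
  - left. intros x y Hx Hxy Hy. apply (cont_inj_same_orientation h a b m1 m2); auto; lra.
  - right. intros x y Hx Hxy Hy.
    destruct (Rlt_or_le (h x) (h y)) as [Hl|Hl].
    + exfalso. assert (h m1 < h m2) by (apply (cont_inj_same_orientation h a b x y); auto; lra).
      lra.
    + destruct (Rle_lt_or_eq_dec _ _ Hl); auto. assert (x = y) by (apply Hi; auto; lra). lra.
Qed.

Lemma increasing_not_decreasing h a b a' b' :
  increasing_on h a b -> a <= a' -> a' < b' -> b' <= b -> ~ decreasing_on h a' b'.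
Proof.
  intros H H1 H2 H3 Hd.
  assert (h (a' + (b' - a') / 3) < h (a' + 2 * (b' - a') / 3)) by (apply H; lra).
  assert (h (a' + 2 * (b' - a') / 3) < h (a' + (b' - a') / 3)) by (apply Hd; lra).
  lra.
Qed.

Lemma decreasing_on_sub h a b a' b' :
  decreasing_on h a b -> a <= a' -> b' <= b -> decreasing_on h a' b'.
Proof. intros H H1 H2 x y Hx Hxy Hy. apply H; lra. Qed.

Definition piece (h : R -> R) (a b : R) : Prop :=
  a < b /\ 0 <= a /\ b <= 1 /\ cont_on h a b /\ inj_on h a b /\ (forall x, a < x < b -> X (h x)).

Lemma piece_beta h a b : piece h a b -> is_inf (img h a b) (beta h a b).
Proof. intros (H1 & _ & _ & _ & _ & H6). apply beta_spec; auto. intros x Hx; apply H6; auto. Qed.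

Lemma piece_monotone h a b : piece h a b -> increasing_on h a b \/ decreasing_on h a b.
Proof. intros (H1 & _ & _ & H4 & H5 & _). apply cont_inj_monotone; auto. Qed.

Lemma piece_beta_lt h a b x : piece h a b -> a < x < b -> beta h a b < h x.
Proof.
  intros Hp Hx. destruct (piece_beta h a b Hp) as [Hlb _].
  assert (Hmid : forall z, a < z < b -> h z < h x -> beta h a b < h x).
  { intros z Hz Hzx. assert (beta h a b <= h z) by (apply Hlb; exists z; auto). lra. }
  destruct (piece_monotone h a b Hp) as [Hm|Hm].
  - apply (Hmid ((a + x) / 2)); [lra | apply Hm; lra].
  - apply (Hmid ((x + b) / 2)); [lra | apply Hm; lra].
Qed.

Lemma piece_img_between h a b x0 y : piece h a b -> a < x0 < b -> beta h a b < y <= h x0 ->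
  exists x, a < x < b /\ h x = y.
Proof.
  intros Hp Hx0 Hy. destruct (Req_dec y (h x0)) as [->|Hne]; [exists x0; auto|].
  destruct (piece_beta h a b Hp) as [_ Hgl].
  assert (exists x1, a < x1 < b /\ h x1 < y) as [x1 [Hx1 Hx1y]].
  { apply NNPP. intros Hn. assert (y <= beta h a b); [|lra].
    apply Hgl. intros z [x [Hx ->]]. apply Rnot_lt_le. intros Hxy. apply Hn. exists x; auto. }
  destruct Hp as (_ & _ & _ & Hc & _).
  apply (IVT_between h a b x1 x0 y); auto. lra.
Qed.

Lemma continuity_pt_near h c : continuity_pt h c -> forall eps, 0 < eps ->
  exists del, 0 < del /\ forall x, Rabs (x - c) < del -> Rabs (h x - h c) < eps.
Proof.
  intros Hc eps He. destruct (Hc eps He) as [del [Hd H]].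
  exists del; split; auto. intros x Hx.
  destruct (Req_dec x c) as [->|Hne].
  - rewrite Rminus_diag, Rabs_R0; auto.
  - apply (H x). split; [split; [constructor|auto]|]. apply Hx.
Qed.

Lemma inf_img_increasing_left h a b c m : increasing_on h a b -> a < c < b ->
  is_inf (img h a b) m -> is_inf (img h a c) m.
Proof.
  intros Hi Hc [Hlb Hgl]. split.
  - intros y [x [Hx ->]]. apply Hlb. exists x; split; auto; lra.
  - intros m' Hm'. apply Hgl. intros y [x [Hx ->]].
    destruct (Rlt_or_le x c).
    + apply Hm'. exists x; split; auto; lra.
    + assert (h ((a + c) / 2) < h x) by (apply Hi; lra).
      assert (m' <= h ((a + c) / 2)) by (apply Hm'; exists ((a + c) / 2); split; auto; lra). lra.
Qed.

Lemma inf_img_decreasing_right h a b c m : decreasing_on h a b -> a < c < b ->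
  is_inf (img h a b) m -> is_inf (img h c b) m.
Proof.
  intros Hi Hc [Hlb Hgl]. split.
  - intros y [x [Hx ->]]. apply Hlb. exists x; split; auto; lra.
  - intros m' Hm'. apply Hgl. intros y [x [Hx ->]].
    destruct (Rlt_or_le c x).
    + apply Hm'. exists x; split; auto; lra.
    + assert (h ((c + b) / 2) < h x) by (apply Hi; lra).
      assert (m' <= h ((c + b) / 2)) by (apply Hm'; exists ((c + b) / 2); split; auto; lra). lra.
Qed.

Lemma inf_img_increasing_at h a b c : increasing_on h a b -> a < c < b -> continuity_pt h c ->
  is_inf (img h c b) (h c).
Proof.
  intros Hi Hc Hcont. split.
  - intros y [x [Hx ->]]. left. apply Hi; lra.
  - intros m' Hm'. apply Rnot_lt_le. intros Hlt.
    destruct (continuity_pt_near h c Hcont (m' - h c)) as [del [Hd Hn]]; [lra|].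
    set (x := c + Rmin del (b - c) / 2).
    pose proof (Rmin_l del (b - c)). pose proof (Rmin_r del (b - c)).
    assert (0 < Rmin del (b - c)) by (apply Rmin_pos; lra).
    assert (m' <= h x) by (apply Hm'; exists x; split; auto; unfold x; lra).
    assert (Hclose : Rabs (h x - h c) < m' - h c) by (apply Hn; unfold x; rewrite Rabs_right; lra).
    apply Rabs_def2 in Hclose. lra.
Qed.

Lemma inf_img_decreasing_at h a b c : decreasing_on h a b -> a < c < b -> continuity_pt h c ->
  is_inf (img h a c) (h c).
Proof.
  intros Hi Hc Hcont. split.
  - intros y [x [Hx ->]]. left. apply Hi; lra.
  - intros m' Hm'. apply Rnot_lt_le. intros Hlt.
    destruct (continuity_pt_near h c Hcont (m' - h c)) as [del [Hd Hn]]; [lra|].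
    set (x := c - Rmin del (c - a) / 2).
    pose proof (Rmin_l del (c - a)). pose proof (Rmin_r del (c - a)).
    assert (0 < Rmin del (c - a)) by (apply Rmin_pos; lra).
    assert (m' <= h x) by (apply Hm'; exists x; split; auto; unfold x; lra).
    assert (Hclose : Rabs (h x - h c) < m' - h c) by (apply Hn; unfold x; rewrite Rabs_left; lra).
    apply Rabs_def2 in Hclose. lra.
Qed.

Lemma piece_exists_above h a b x : piece h a b -> a < x < b -> exists x', a < x' < b /\ h x < h x'.
Proof.
  intros Hp Hx. destruct (piece_monotone _ _ _ Hp) as [M|M].
  - exists ((x + b) / 2). split; [lra|]. apply M; lra.
  - exists ((a + x) / 2). split; [lra|]. apply M; lra.
Qed.

(** * Cut sets *)

(* A cut set is the set of left endpoints of a partition of X into intervals. *)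
Definition cutset (C : list R) : Prop := NoDup C /\ In 0 C /\ (forall c, In c C -> X c).

Definition cont_off (h : R -> R) (C : list R) : Prop :=
  forall x, 0 < x < 1 -> ~ In x C -> continuity_pt h x.

Lemma cont_off_cons h C c : cont_off h C -> cont_off h (c :: C).
Proof. intros H x Hx Hn. apply H; auto. intro; apply Hn; right; auto. Qed.

Lemma cont_off_incl h C C' : cont_off h C -> (forall x, In x C -> In x C') -> cont_off h C'.
Proof. intros H Hi x Hx Hn. apply H; auto. Qed.

Definition next_cut (C : list R) (x : R) : R :=
  fold_right (fun d acc => if Rlt_dec x d then Rmin d acc else acc) 1 C.

Definition prev_cut (C : list R) (x : R) : R :=
  fold_right (fun d acc => if Rlt_dec d x then Rmax d acc else acc) 0 C.

Lemma next_cut_le1 C x : next_cut C x <= 1.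
Proof.
  induction C; simpl; [lra|]. destruct (Rlt_dec x a); auto.
  pose proof (Rmin_r a (next_cut C x)). unfold next_cut in *. lra.
Qed.

Lemma next_cut_le C x d : In d C -> x < d -> next_cut C x <= d.
Proof.
  induction C; simpl; intros Hd Hx; [contradiction|].
  fold (next_cut C x). destruct Hd as [->|Hd].
  - destruct (Rlt_dec x d); [apply Rmin_l|lra].
  - destruct (Rlt_dec x a); auto.
    pose proof (Rmin_r a (next_cut C x)). specialize (IHC Hd Hx). lra.
Qed.

Lemma next_cut_In C x : next_cut C x = 1 \/ In (next_cut C x) C.
Proof.
  induction C; simpl; auto. fold (next_cut C x).
  destruct (Rlt_dec x a); [unfold Rmin; destruct (Rle_dec a (next_cut C x))|]; tauto.
Qed.

Lemma next_cut_gt C x : x < 1 -> (forall d, In d C -> d < 1) -> x < next_cut C x.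
Proof.
  induction C; simpl; intros Hx HC; auto. fold (next_cut C x).
  destruct (Rlt_dec x a); auto. apply Rmin_glb_lt; auto.
Qed.

Lemma next_cut_gap C x d : In d C -> ~ (x < d < next_cut C x).
Proof. intros Hd [H1 H2]. pose proof (next_cut_le C x d Hd H1). lra. Qed.

Lemma next_cut_charact C x n : x < 1 -> (forall d, In d C -> d < 1) ->
  (n = 1 \/ In n C) -> x < n -> n <= 1 -> (forall d, In d C -> x < d -> n <= d) ->
  next_cut C x = n.
Proof.
  intros Hx HC Hn Hxn Hn1 Hmin. apply Rle_antisym.
  - destruct Hn as [->|Hn]; [apply next_cut_le1 | apply next_cut_le; auto].
  - destruct (next_cut_In C x) as [E|E]; [rewrite E; auto|].
    apply Hmin; auto. apply next_cut_gt; auto.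
Qed.

Lemma next_cut_same C C' x : (forall d, In d C <-> In d C') -> x < 1 ->
  (forall d, In d C -> d < 1) -> next_cut C x = next_cut C' x.
Proof.
  intros Hi Hx Hlt. symmetry. apply next_cut_charact; auto.
  - intros d Hd; apply Hlt, Hi; auto.
  - destruct (next_cut_In C x); auto. right; apply Hi; auto.
  - apply next_cut_gt; auto.
  - apply next_cut_le1.
  - intros d Hd Hxd. apply next_cut_le; auto. apply Hi; auto.
Qed.

Lemma prev_cut_spec C x : 0 < x -> (forall d, In d C -> 0 <= d) ->
  prev_cut C x < x /\ (prev_cut C x = 0 \/ In (prev_cut C x) C) /\
  (forall d, In d C -> d < x -> d <= prev_cut C x).
Proof.
  intros Hx HC. induction C as [|a C IH]; simpl.
  - split; [lra|]. split; auto. intros; contradiction.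
  - fold (prev_cut C x). destruct IH as (A & B & D); [intros; apply HC; simpl; auto|].
    destruct (Rlt_dec a x).
    + split; [apply Rmax_lub_lt; auto|]. split.
      * unfold Rmax. destruct (Rle_dec a (prev_cut C x)); tauto.
      * intros d [->|Hd] Hdx; [apply Rmax_l|].
        pose proof (Rmax_r a (prev_cut C x)). specialize (D d Hd Hdx); lra.
    + split; auto. split; [tauto|]. intros d [->|Hd] Hdx; [contradiction|auto].
Qed.

Lemma cutset_lt1 C : cutset C -> forall d, In d C -> d < 1.
Proof. intros (_ & _ & H) d Hd. apply H; auto. Qed.

Lemma cutset_cons C c : cutset C -> X c -> ~ In c C -> cutset (c :: C).
Proof.
  intros (ND & H0 & HX) Hc HcC. split; [constructor; auto|]. split; [right; auto|].
  intros d [<-|Hd]; auto.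
Qed.

Lemma cutset_cover C x : cutset C -> X x -> ~ In x C -> exists d, In d C /\ d < x < next_cut C d.
Proof.
  intros HC Hx Hn. pose proof (cutset_lt1 C HC) as Hlt. destruct HC as (ND & H0 & HX).
  assert (Hx0 : 0 < x) by (destruct Hx as [[Hx|Hx] _]; auto; subst; contradiction).
  destruct (prev_cut_spec C x Hx0) as (A & B & D); [intros d Hd; apply HX; auto|].
  assert (HpC : In (prev_cut C x) C) by (destruct B as [B|B]; auto; rewrite B; auto).
  exists (prev_cut C x). split; auto. split; auto.
  apply Rnot_le_lt. intros Hle.
  destruct (next_cut_In C (prev_cut C x)) as [E|E]; [rewrite E in Hle; destruct Hx; lra|].
  destruct (Rle_lt_or_eq_dec _ _ Hle) as [Hl|He].
  - specialize (D _ E Hl). pose proof (next_cut_gt C (prev_cut C x) ltac:(apply Hlt; auto) Hlt).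
    lra.
  - apply Hn. rewrite <- He; auto.
Qed.

Lemma next_cut_disjoint C c d x : In c C -> In d C -> c <> d ->
  c < x < next_cut C c -> d < x < next_cut C d -> False.
Proof.
  intros Hc Hd Hcd H1 H2. destruct (Rtotal_order c d) as [Hl|[He|Hg]]; [| contradiction |].
  - pose proof (next_cut_le C c d Hd Hl). lra.
  - pose proof (next_cut_le C d c Hc Hg). lra.
Qed.

Lemma PCB_inj h x y : PCB h -> X x -> X y -> h x = h y -> x = y.
Proof. intros (_ & H & _) ; apply H. Qed.

Lemma PCB_X h x : PCB h -> X x -> X (h x).
Proof. intros (H & _) ; apply H. Qed.

Lemma PCB_surj h y : PCB h -> X y -> exists x, X x /\ h x = y.
Proof. intros (_ & _ & H & _); apply H. Qed.

Lemma cutset_piece h C c : PCB h -> cutset C -> cont_off h C -> In c C -> piece h c (next_cut C c).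
Proof.
  intros Hh HC Hg Hc. pose proof (cutset_lt1 C HC) as Hlt.
  destruct HC as (ND & H0 & HX). pose proof (HX c Hc) as [Hc0 Hc1].
  pose proof (next_cut_gt C c Hc1 Hlt). pose proof (next_cut_le1 C c).
  repeat split; auto.
  - intros x Hx. apply Hg; [lra|]. intro Hin. apply (next_cut_gap C c x Hin); auto.
  - intros x y Hx Hy. apply PCB_inj; auto; split; lra.
  - apply PCB_X; auto; split; lra.
  - apply PCB_X; auto; split; lra.
Qed.

Section CutBeta.
Variable h : R -> R.
Variable C : list R.
Hypothesis Hh : PCB h.
Hypothesis HC : cutset C.
Hypothesis Hg : cont_off h C.

Definition cut_beta (c : R) : R := beta h c (next_cut C c).

Let Hpiece c : In c C -> piece h c (next_cut C c) := cutset_piece h C c Hh HC Hg.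

Lemma cut_beta_X c : In c C -> X (cut_beta c).
Proof.
  intros Hc. pose proof (Hpiece c Hc) as Hp.
  destruct (piece_beta _ _ _ Hp) as [_ Hgl].
  destruct Hp as (Hlt & _ & _ & _ & _ & HX).
  set (m := (c + next_cut C c) / 2). assert (Hm : c < m < next_cut C c) by (unfold m; lra).
  split.
  - apply Hgl. intros y [x [Hx ->]]. apply HX; auto.
  - pose proof (piece_beta_lt h _ _ m (Hpiece c Hc) Hm). destruct (HX m Hm). unfold cut_beta; lra.
Qed.

(* Distinct pieces have disjoint images, and each image contains the interval between its
   infimum and any of its values. *)
Lemma cut_pieces_img_disjoint c d x0 x1 y : In c C -> In d C -> c <> d ->
  c < x0 < next_cut C c -> d < x1 < next_cut C d ->
  cut_beta c < y <= h x0 -> cut_beta d < y <= h x1 -> False.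
Proof.
  intros Hc Hd Hcd Hx0 Hx1 Hy0 Hy1.
  destruct (piece_img_between h c _ x0 y (Hpiece c Hc) Hx0 Hy0) as [u [Hu Eu]].
  destruct (piece_img_between h d _ x1 y (Hpiece d Hd) Hx1 Hy1) as [v [Hv Ev]].
  assert (u = v).
  { destruct (Hpiece c Hc) as (_ & Hc0 & Hc1 & _), (Hpiece d Hd) as (_ & Hd0 & Hd1 & _).
    apply (PCB_inj h); auto; [split; lra | split; lra | congruence]. }
  subst v. apply (next_cut_disjoint C c d u); auto.
Qed.

Lemma cut_beta_inj : inj_list cut_beta C.
Proof.
  intros c d Hc Hd E. apply NNPP. intros Hcd.
  set (x0 := (c + next_cut C c) / 2). set (x1 := (d + next_cut C d) / 2).
  assert (Hx0 : c < x0 < next_cut C c) by (destruct (Hpiece c Hc); unfold x0; lra).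
  assert (Hx1 : d < x1 < next_cut C d) by (destruct (Hpiece d Hd); unfold x1; lra).
  pose proof (piece_beta_lt _ _ _ x0 (Hpiece c Hc) Hx0).
  pose proof (piece_beta_lt _ _ _ x1 (Hpiece d Hd) Hx1).
  pose proof (Rmin_l (h x0) (h x1)). pose proof (Rmin_r (h x0) (h x1)).
  assert (cut_beta c < Rmin (h x0) (h x1)) by (apply Rmin_glb_lt; unfold cut_beta in *; lra).
  apply (cut_pieces_img_disjoint c d x0 x1 ((cut_beta c + Rmin (h x0) (h x1)) / 2));
    auto; lra.
Qed.

Lemma img_avoids_cut_beta c d x : In c C -> In d C -> d < x < next_cut C d -> h x <> cut_beta c.
Proof.
  intros Hc Hd Hx E.
  destruct (Req_dec c d) as [->|Hcd].
  { pose proof (piece_beta_lt h d _ x (Hpiece d Hd) Hx). unfold cut_beta in E. lra. }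
  destruct (piece_exists_above h d _ x (Hpiece d Hd) Hx) as [x' [Hx' Hxx']].
  set (x0 := (c + next_cut C c) / 2).
  assert (Hx0 : c < x0 < next_cut C c) by (destruct (Hpiece c Hc); unfold x0; lra).
  pose proof (piece_beta_lt _ _ _ x0 (Hpiece c Hc) Hx0).
  pose proof (piece_beta_lt _ _ _ x (Hpiece d Hd) Hx).
  pose proof (Rmin_l (h x') (h x0)). pose proof (Rmin_r (h x') (h x0)).
  assert (cut_beta c < Rmin (h x') (h x0)) by (apply Rmin_glb_lt; unfold cut_beta in *; lra).
  apply (cut_pieces_img_disjoint c d x0 x' ((cut_beta c + Rmin (h x') (h x0)) / 2));
    unfold cut_beta in *; auto; lra.
Qed.

Lemma cut_beta_in_img_cuts c : In c C -> In (cut_beta c) (map h C).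
Proof.
  intros Hc. destruct (PCB_surj h (cut_beta c) Hh (cut_beta_X c Hc)) as [x [Hx Ex]].
  destruct (classic (In x C)) as [Hin|Hnin].
  - rewrite <- Ex. apply in_map; auto.
  - destruct (cutset_cover C x HC Hx Hnin) as [d [Hd Hdx]].
    exfalso. apply (img_avoids_cut_beta c d x); auto.
Qed.

Lemma PCB_inj_list : inj_list h C.
Proof. intros x y Hx Hy. apply PCB_inj; auto; apply HC; auto. Qed.

End CutBeta.

Lemma cut_beta_perm h C : PCB h -> cutset C -> cont_off h C ->
  Permutation (map h C) (map (cut_beta h C) C).
Proof.
  intros Hh HC Hg. apply Permutation_sym, NoDup_Permutation_bis.
  - apply NoDup_map_inj_list; [apply HC | apply cut_beta_inj; auto].
  - rewrite !length_map; auto.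
  - intros y Hy. apply in_map_iff in Hy as [c [<- Hc]]. apply cut_beta_in_img_cuts; auto.
Qed.

(** * Independence of the partition *)

Definition decb (h : R -> R) (a b : R) : bool :=
  if excluded_middle_informative (decreasing_on h a b) then true else false.

Lemma decb_true h a b : decreasing_on h a b -> decb h a b = true.
Proof. unfold decb; destruct excluded_middle_informative; auto; contradiction. Qed.

Lemma decb_false h a b : ~ decreasing_on h a b -> decb h a b = false.
Proof. unfold decb; destruct excluded_middle_informative; auto; contradiction. Qed.

(* epsilon(h, P) for the partition P of X cut at the points of C *)
Definition eps_cut (h : R -> R) (C : list R) : bool :=
  xorb (xor_sum C (fun c => decb h c (next_cut C c))) (inv_parity h (cut_beta h C) C).

Section Refine.
Variables (h : R -> R) (C : list R) (a c : R).
Hypothesis Hh : PCB h.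
Hypothesis HC : cutset C.
Hypothesis Hg : cont_off h C.
Hypothesis HcX : X c.
Hypothesis HcC : ~ In c C.
Hypothesis HaC : In a C.
Hypothesis Hac : a < c < next_cut C a.

Local Notation b := (next_cut C a).

Let Hlt : forall d, In d C -> d < 1 := cutset_lt1 C HC.
Let Hpa : piece h a b := cutset_piece h C a Hh HC Hg HaC.
Let Hpos : forall u v, a <= u -> v <= b -> forall x, u < x < v -> 0 <= h x.
Proof. intros u v Hu Hv x Hx. destruct Hpa as (_ & _ & _ & _ & _ & P6). apply P6; lra. Qed.

Lemma cutset_refine : cutset (c :: C).
Proof. apply cutset_cons; auto. Qed.

Lemma next_cut_refine_l : next_cut (c :: C) a = c.
Proof.
  pose proof (Hlt a HaC). destruct HcX.
  apply next_cut_charact; try lra; [ | simpl; auto | ].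
  - intros d [<-|Hd]; [lra | auto].
  - intros d [<-|Hd] Had; [lra|]. pose proof (next_cut_le C a d Hd Had). lra.
Qed.

Lemma next_cut_refine_r : next_cut (c :: C) c = b.
Proof.
  pose proof (next_cut_le1 C a). destruct HcX.
  apply next_cut_charact; try lra.
  - intros d [<-|Hd]; [lra | auto].
  - destruct (next_cut_In C a); simpl; auto.
  - intros d [<-|Hd] Hcd; [lra|]. apply next_cut_le; auto; lra.
Qed.

Lemma next_cut_refine_other d : In d C -> d <> a -> next_cut (c :: C) d = next_cut C d.
Proof.
  intros Hd Hda. apply next_cut_charact; auto.
  - intros e [<-|He]; [apply HcX | auto].
  - destruct (next_cut_In C d); simpl; auto.
  - apply next_cut_gt; auto.
  - apply next_cut_le1.
  - intros e [<-|He] Hde; [|apply next_cut_le; auto].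
    apply Rnot_lt_le. intros Hlt2. apply (next_cut_disjoint C a d c); auto; lra.
Qed.

Lemma decb_refine :
  xor_sum (c :: C) (fun d => decb h d (next_cut (c :: C) d)) =
  xorb (decb h a b) (xor_sum C (fun d => decb h d (next_cut C d))).
Proof.
  rewrite xor_sum_cons, next_cut_refine_r.
  rewrite (xor_sum_update C a _ (fun d => decb h d (next_cut C d))); [| apply HC | auto |].
  2:{ intros d Hd Hda. rewrite next_cut_refine_other; auto. }
  rewrite next_cut_refine_l.
  assert (Hsame : decb h c b = decb h a b /\ decb h a c = decb h a b).
  { destruct (piece_monotone _ _ _ Hpa) as [M|M]; [rewrite !decb_false | rewrite !decb_true];
      try (apply (increasing_not_decreasing h a b); auto; lra);
      try (apply (decreasing_on_sub h a b); auto; lra); auto. }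
  destruct Hsame as [-> ->]. destruct (decb h a b), (xor_sum C _); reflexivity.
Qed.

(* The infima on the refined partition are [beta_new] if h increases on [a, b[, and
   [beta_new] composed with the transposition (a c) if it decreases. *)
Let beta_new (x : R) : R := if Req_dec_T x c then h c else cut_beta h C x.

Let beta_new_c : beta_new c = h c.
Proof. unfold beta_new; destruct Req_dec_T; congruence. Qed.

Let beta_new_other x : In x C -> beta_new x = cut_beta h C x.
Proof. intros Hx. unfold beta_new. destruct Req_dec_T; auto. subst; contradiction. Qed.

Let h_inj_refine : inj_list h (c :: C).
Proof. intros x y [<-|Hx] [<-|Hy]; apply PCB_inj; auto; apply HC; auto. Qed.

Let h_c_not_cut_beta x : In x C -> h c <> cut_beta h C x.
Proof.
  intros Hx E. assert (Hin : In (h c) (map h C)) by (rewrite E; apply cut_beta_in_img_cuts; auto).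
  apply in_map_iff in Hin as [e [Ee He]].
  assert (c = e) by (apply h_inj_refine; simpl; auto). subst; contradiction.
Qed.

Lemma beta_new_inj : inj_list beta_new (c :: C).
Proof.
  intros x y [<-|Hx] [<-|Hy]; rewrite ?beta_new_c, ?beta_new_other by auto; intros E; auto.
  - exfalso; apply (h_c_not_cut_beta y); auto.
  - exfalso; apply (h_c_not_cut_beta x); auto.
  - apply (cut_beta_inj h C); auto.
Qed.

Lemma beta_new_inv_parity : inv_parity h beta_new (c :: C) = inv_parity h (cut_beta h C) C.
Proof.
  rewrite inv_parity_cons_fixed; auto using beta_new_inj.
  - apply inv_parity_ext; auto.
  - rewrite (map_ext_in beta_new (cut_beta h C)) by auto. apply cut_beta_perm; auto.
Qed.

Lemma cut_beta_refine_other x : In x C -> x <> a -> cut_beta h (c :: C) x = beta_new x.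
Proof.
  intros Hx Hxa. unfold beta_new, cut_beta. destruct Req_dec_T; [subst; contradiction|].
  rewrite next_cut_refine_other; auto.
Qed.

Let Hcont_c : continuity_pt h c.
Proof. apply Hg; auto. pose proof (proj2 (proj2 HC) a HaC) as [Ha0 _]. destruct HcX. lra. Qed.

Lemma cut_beta_refine_increasing : increasing_on h a b ->
  forall x, In x (c :: C) -> cut_beta h (c :: C) x = beta_new x.
Proof.
  intros M x [<-|Hx]; unfold beta_new at 1; unfold cut_beta.
  - destruct Req_dec_T; [|congruence]. rewrite next_cut_refine_r.
    apply beta_eq; [lra | apply Hpos; lra |]. apply (inf_img_increasing_at h a b); auto.
  - destruct (Req_dec x a) as [->|Hxa]; [|apply cut_beta_refine_other; auto].
    destruct Req_dec_T; [lra|]. rewrite next_cut_refine_l.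
    apply beta_eq; [lra | apply Hpos; lra |].
    apply (inf_img_increasing_left h a b); auto. apply piece_beta; auto.
Qed.

Lemma cut_beta_refine_decreasing : decreasing_on h a b ->
  forall x, In x (c :: C) -> cut_beta h (c :: C) x = beta_new (swap a c x).
Proof.
  intros M x [<-|Hx]; unfold cut_beta.
  - rewrite swap_r. unfold beta_new. destruct Req_dec_T; [lra|]. rewrite next_cut_refine_r.
    apply beta_eq; [lra | apply Hpos; lra |].
    apply (inf_img_decreasing_right h a b); auto. apply piece_beta; auto.
  - destruct (Req_dec x a) as [->|Hxa].
    + rewrite swap_l. unfold beta_new. destruct Req_dec_T; [|congruence]. rewrite next_cut_refine_l.
      apply beta_eq; [lra | apply Hpos; lra |]. apply (inf_img_decreasing_at h a b); auto.
    + rewrite swap_other by (try exact Hxa; intro E; rewrite E in Hx; contradiction).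
      apply cut_beta_refine_other; auto.
Qed.

Lemma inv_parity_refine :
  inv_parity h (cut_beta h (c :: C)) (c :: C) =
  xorb (decb h a b) (inv_parity h (cut_beta h C) C).
Proof.
  destruct (piece_monotone _ _ _ Hpa) as [M|M].
  - rewrite decb_false by (apply (increasing_not_decreasing h a b); auto; lra).
    rewrite <- beta_new_inv_parity. apply inv_parity_ext; auto.
    apply cut_beta_refine_increasing; auto.
  - rewrite decb_true by auto. rewrite <- beta_new_inv_parity.
    pose proof cutset_refine as (ND & _).
    assert (HaK : In a (c :: C)) by (right; auto).
    assert (HcK : In c (c :: C)) by (left; auto).
    rewrite (inv_parity_ext h h _ (fun x => beta_new (swap a c x))); auto;
      [| apply cut_beta_refine_decreasing; auto].
    rewrite (inv_parity_trans h (fun x => h (swap a c x)) (fun x => beta_new (swap a c x)));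
      auto using inj_list_swap, beta_new_inj.
    rewrite inv_parity_swap by (auto; lra). f_equal.
    apply (xor_sum2_swap (c :: C) a c
             (fun u v => Rltb (h u) (h v) && Rltb (beta_new v) (beta_new u)));
      auto.
Qed.

Lemma eps_cut_refine : eps_cut h (c :: C) = eps_cut h C.
Proof.
  unfold eps_cut. rewrite decb_refine, inv_parity_refine.
  destruct (decb h a b), (xor_sum C _), (inv_parity h _ C); reflexivity.
Qed.

End Refine.

Lemma eps_cut_perm h C C' : cutset C -> Permutation C C' -> eps_cut h C = eps_cut h C'.
Proof.
  intros HC HP.
  assert (Hi : forall d, In d C <-> In d C')
    by (intros; split; apply Permutation_in; auto; apply Permutation_sym; auto).
  pose proof (cutset_lt1 C HC) as Hlt.
  assert (N : forall x, In x C -> next_cut C x = next_cut C' x).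
  { intros x Hx. apply next_cut_same; auto. }
  unfold eps_cut, inv_parity, cut_beta. f_equal.
  - rewrite (xor_sum_perm _ _ _ HP). apply xor_sum_ext. intros x Hx. rewrite N; auto.
    apply Hi; auto.
  - rewrite (xor_sum2_perm _ _ _ HP). apply xor_sum2_ext. intros x y Hx Hy.
    rewrite !N; auto; apply Hi; auto.
Qed.

Lemma cutset_extend l C : cutset C -> (forall x, In x l -> X x) ->
  exists C', cutset C' /\ (forall x, In x C' <-> In x C \/ In x l) /\
    (forall h, PCB h -> cont_off h C -> eps_cut h C' = eps_cut h C).
Proof.
  revert C. induction l as [|p l IH]; intros C HC Hl.
  - exists C. split; [|split]; auto. simpl; tauto.
  - destruct (classic (In p C)) as [Hp|Hp].
    + destruct (IH C HC) as [C' (A & F & E)]; [intros; apply Hl; right; auto|].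
      exists C'. split; auto. split; auto.
      intros x. rewrite F. simpl. split; [tauto|]. intros [H|[<-|H]]; auto.
    + destruct (IH (p :: C)) as [C' (A & F & E)];
        [apply cutset_cons; auto; apply Hl; left; auto | intros; apply Hl; right; auto |].
      exists C'. split; auto. split; [intros x; rewrite F; simpl; tauto|].
      intros h Hh Hg. rewrite E; auto using cont_off_cons.
      destruct (cutset_cover C p HC) as [a [Ha Hap]]; auto; [apply Hl; left; auto|].
      apply (eps_cut_refine h C a p); auto. apply Hl; left; auto.
Qed.

Lemma eps_cut_indep h C1 C2 : PCB h -> cutset C1 -> cont_off h C1 -> cutset C2 -> cont_off h C2 ->
  eps_cut h C1 = eps_cut h C2.
Proof.
  intros Hh H1 G1 H2 G2.
  destruct (cutset_extend C2 C1 H1) as [C' (A & F & E)]; [apply H2|].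
  destruct (cutset_extend C1 C2 H2) as [C'' (A' & F' & E')]; [apply H1|].
  rewrite <- (E h), <- (E' h); auto. apply eps_cut_perm; auto.
  apply NoDup_Permutation; [apply A | apply A' |]. intros x; rewrite F, F'; tauto.
Qed.

Lemma contX_continuity_pt h x : 0 < x < 1 -> contX_at h x -> continuity_pt h x.
Proof.
  intros Hx H eps He. destruct (H eps He) as [d [Hd Hy]].
  exists (Rmin d (Rmin x (1 - x))). split.
  - apply Rmin_pos; auto. apply Rmin_pos; lra.
  - intros y [_ Hyx]. simpl in *. unfold R_dist in *.
    pose proof (Rmin_l d (Rmin x (1 - x))). pose proof (Rmin_r d (Rmin x (1 - x))).
    pose proof (Rmin_l x (1 - x)). pose proof (Rmin_r x (1 - x)).
    apply Rabs_def2 in Hyx as Hyx'. apply Hy; [split|]; lra.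
Qed.

Lemma cutset_0 : cutset [0].
Proof.
  split; [repeat constructor; simpl; tauto|]. split; [left; auto|].
  intros c [<-|[]]. split; lra.
Qed.

Lemma cutset_from_list l : (forall x, In x l -> X x) ->
  exists C, cutset C /\ forall x, In x C <-> x = 0 \/ In x l.
Proof.
  intros Hl. destruct (cutset_extend l [0] cutset_0 Hl) as [C (HC & F & _)].
  exists C. split; auto. intros x. rewrite F. simpl. intuition.
Qed.

Lemma cont_off_exists h : PCB h -> exists C, cutset C /\ cont_off h C.
Proof.
  intros (_ & _ & _ & _ & [S HS]).
  destruct (cutset_from_list
              (filter (fun x => if excluded_middle_informative (X x) then true else false) S))
    as [C [HC F]].
  { intros x Hx. apply filter_In in Hx as [_ Hx]. destruct excluded_middle_informative; auto.
    discriminate. }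
  exists C. split; auto. intros x Hx Hn. apply contX_continuity_pt; auto. apply HS; [split; lra|].
  intro HxS. apply Hn, F. right. apply filter_In. split; auto.
  destruct excluded_middle_informative as [|Hn']; auto. exfalso; apply Hn'. split; lra.
Qed.

(** * Multiplicativity *)

Lemma decb_comp g h a b a' b' : a < b -> a' < b' ->
  (forall x, a < x < b -> a' < h x < b') ->
  (increasing_on h a b \/ decreasing_on h a b) ->
  (increasing_on g a' b' \/ decreasing_on g a' b') ->
  decb (fun x => g (h x)) a b = xorb (decb g a' b') (decb h a b).
Proof.
  intros Hab Hab' Hmap Mh Mg.
  assert (Hx : forall x, a < x < b -> a' < h x /\ h x < b') by (intros; apply Hmap; auto).
  assert (Hinc : forall f a0 b0, a0 < b0 -> increasing_on f a0 b0 -> decb f a0 b0 = false).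
  { intros f a0 b0 H0 M. apply decb_false, (increasing_not_decreasing f a0 b0); auto; lra. }
  destruct Mh as [Mh|Mh], Mg as [Mg|Mg];
    [ rewrite !Hinc | rewrite (Hinc h), !decb_true | rewrite (Hinc g), !decb_true
    | rewrite (Hinc (fun x => g (h x))), !decb_true ]; auto;
    intros x y H1 H2 H3; destruct (Hx x), (Hx y); try lra;
    apply Mg; try apply Mh; auto; lra.
Qed.

Section Comp.
Variables g h : R -> R.
Variable C : list R.
Hypothesis Hgp : PCB g.
Hypothesis Hhp : PCB h.
Hypothesis HC : cutset C.
Hypothesis HhC : cont_off h C.

Local Notation bth := (cut_beta h C).
Local Notation B := (map (cut_beta h C) C).

Let B_lt1 d : In d B -> d < 1.
Proof.
  intros Hd. apply in_map_iff in Hd as [c [<- Hc]]. apply (cut_beta_X h C Hhp HC HhC c Hc).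
Qed.

Let Hpiece c : In c C -> piece h c (next_cut C c) := cutset_piece h C c Hhp HC HhC.

Lemma img_cut_piece_sub c x : In c C -> c < x < next_cut C c ->
  bth c < h x < next_cut B (bth c).
Proof.
  intros Hc Hx. split; [apply piece_beta_lt; auto|].
  apply Rnot_le_lt. intros Hle.
  pose proof (cut_beta_X h C Hhp HC HhC c Hc) as [_ Hb1].
  pose proof (PCB_X h x Hhp) as [_ Hhx1]; [destruct (Hpiece c Hc) as (_ & ? & ? & _); split; lra|].
  destruct (next_cut_In B (bth c)) as [E|E]; [lra|].
  apply in_map_iff in E as [d [Ed Hd]].
  pose proof (next_cut_gt B (bth c) Hb1 B_lt1).
  destruct (piece_img_between h c _ x (next_cut B (bth c)) (Hpiece c Hc) Hx) as [x' [Hx' Ex']];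
    [unfold cut_beta in *; lra|].
  apply (img_avoids_cut_beta h C Hhp HC HhC d c x'); auto. congruence.
Qed.

Lemma img_cut_piece_sup c y : In c C -> bth c < y < next_cut B (bth c) ->
  img h c (next_cut C c) y.
Proof.
  intros Hc [H1 H2].
  pose proof (cut_beta_X h C Hhp HC HhC c Hc) as [Hb0 _]. pose proof (next_cut_le1 B (bth c)).
  destruct (PCB_surj h y Hhp) as [x [HxX <-]]; [split; lra|].
  destruct (classic (In x C)) as [HxC|HxC].
  { exfalso. apply (next_cut_gap B (bth c) (h x)); [|lra].
    apply (Permutation_in _ (cut_beta_perm h C Hhp HC HhC)), in_map; auto. }
  destruct (cutset_cover C x HC HxX HxC) as [d [Hd Hdx]].
  destruct (Req_dec d c) as [->|Hdc]; [exists x; auto|]. exfalso.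
  pose proof (piece_beta_lt h d _ x (Hpiece d Hd) Hdx).
  assert (bth d <> bth c) by (intro E; apply Hdc, (cut_beta_inj h C Hhp HC HhC); auto).
  destruct (Rtotal_order (bth c) (bth d)) as [Hl|[He|Hgt]]; [| congruence |].
  - apply (next_cut_gap B (bth c) (bth d)); [apply in_map; auto|]. unfold cut_beta in *. split; lra.
  - destruct (piece_img_between h d _ x (bth c) (Hpiece d Hd) Hdx) as [x' [Hx' Ex']];
      [unfold cut_beta in *; lra|].
    apply (img_avoids_cut_beta h C Hhp HC HhC c d x'); auto.
Qed.

Lemma cutset_img : In 0 (map h C) -> cutset B.
Proof.
  intros H0. split; [|split].
  - apply NoDup_map_inj_list; [apply HC | apply cut_beta_inj; auto].
  - apply (Permutation_in _ (cut_beta_perm h C Hhp HC HhC)); auto.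
  - intros d Hd. apply in_map_iff in Hd as [c [<- Hc]]. apply cut_beta_X; auto.
Qed.

Hypothesis HB : cutset B.
Hypothesis HgB : cont_off g B.
Hypothesis Hghp : PCB (fun x => g (h x)).
Hypothesis HghC : cont_off (fun x => g (h x)) C.

Let HpieceB c : In c C -> piece g (bth c) (next_cut B (bth c)).
Proof. intros Hc. apply cutset_piece; auto. apply in_map; auto. Qed.

Lemma cut_beta_comp c : In c C ->
  cut_beta (fun x => g (h x)) C c = cut_beta g B (bth c).
Proof.
  intros Hc. pose proof (cutset_piece _ C c Hghp HC HghC Hc) as (Hlt & _ & _ & _ & _ & HX).
  unfold cut_beta at 1. apply beta_eq; auto; [intros x Hx; apply HX; auto|].
  apply (is_inf_ext (img g (bth c) (next_cut B (bth c)))); [|apply piece_beta; auto].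
  intros z. split.
  - intros [y [Hy ->]]. destruct (img_cut_piece_sup c y Hc Hy) as [x [Hx ->]]. exists x; auto.
  - intros [x [Hx ->]]. exists (h x). split; auto. apply img_cut_piece_sub; auto.
Qed.

Lemma decb_cut_comp c : In c C ->
  decb (fun x => g (h x)) c (next_cut C c) =
  xorb (decb g (bth c) (next_cut B (bth c))) (decb h c (next_cut C c)).
Proof.
  intros Hc. apply decb_comp; try apply piece_monotone; auto.
  - apply (Hpiece c Hc).
  - apply (HpieceB c Hc).
  - intros x Hx. apply img_cut_piece_sub; auto.
Qed.

(* With beta_f the infima of the pieces of f: inv_parity (g o h) (beta_g o beta_h) splits
   through g o beta_h, and conjugating by g turns the first term into inv_parity h beta_h. *)
Lemma eps_cut_comp : eps_cut (fun x => g (h x)) C = xorb (eps_cut g B) (eps_cut h C).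
Proof.
  assert (HgX : inj_list g (map h C)).
  { intros u v Hu Hv. apply in_map_iff in Hu as [x [<- Hx]]. apply in_map_iff in Hv as [y [<- Hy]].
    apply PCB_inj; auto; apply PCB_X; auto; apply HC; auto. }
  assert (Ibinj : inj_list bth C) by (apply cut_beta_inj; auto).
  assert (HgB_inj : inj_list g B) by (intros u v Hu Hv; apply PCB_inj; auto; apply HB; auto).
  assert (Igb : inj_list (fun x => g (bth x)) C) by (apply inj_list_comp; auto).
  assert (Igbb : inj_list (fun x => cut_beta g B (bth x)) C).
  { apply inj_list_comp; auto. apply (cut_beta_inj g B); auto. }
  assert (Ighinj : inj_list (fun x => g (h x)) C) by (apply inj_list_comp; auto using PCB_inj_list).
  unfold eps_cut.
  rewrite (xor_sum_ext C _ _ decb_cut_comp), xor_sum_xorb, xor_sum_map.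
  rewrite (inv_parity_ext (fun x => g (h x)) (fun x => g (h x)) _
             (fun x => cut_beta g B (bth x)) C);
    [|auto|exact cut_beta_comp].
  rewrite (inv_parity_trans _ (fun x => g (bth x)) _ C Ighinj Igb Igbb).
  rewrite (inv_parity_comp g h bth C (cut_beta_perm h C Hhp HC HhC) (PCB_inj_list h C Hhp HC)
             Ibinj HgX).
  replace (inv_parity g (cut_beta g B) B)
    with (inv_parity (fun x => g (bth x)) (fun x => cut_beta g B (bth x)) C)
    by (unfold inv_parity; rewrite xor_sum2_map; reflexivity).
  destruct (xor_sum C (fun x => decb g (bth x) (next_cut B (bth x)))),
    (xor_sum C (fun x => decb h x (next_cut C x))), (inv_parity h bth C),
    (inv_parity (fun x => g (bth x)) (fun x => cut_beta g B (bth x)) C); reflexivity.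
Qed.

End Comp.

Section Partition.
Variable P : list R.
Hypothesis Hlen : (0 < length P)%nat.
Hypothesis H0 : alpha P 0 = 0.
Hypothesis Hab : forall j, (j < length P)%nat -> alpha P j < bnd P j.

Lemma bnd_alpha j : (S j < length P)%nat -> bnd P j = alpha P (S j).
Proof. intros. unfold bnd, alpha. apply nth_indep; auto. Qed.

Lemma bnd_last j : (S j >= length P)%nat -> bnd P j = 1.
Proof. intros. unfold bnd. apply nth_overflow; lia. Qed.

Lemma alpha_increasing j k : (j < k)%nat -> (k < length P)%nat -> alpha P j < alpha P k.
Proof.
  intros Hjk Hk. induction k as [|k IH]; [lia|].
  rewrite <- bnd_alpha by auto. pose proof (Hab k ltac:(lia)).
  destruct (Nat.eq_dec j k) as [->|Hne]; auto.
  specialize (IH ltac:(lia) ltac:(lia)). lra.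
Qed.

Lemma bnd_le1 j : (j < length P)%nat -> bnd P j <= 1.
Proof.
  intros Hj. destruct (Nat.lt_ge_cases (S j) (length P)) as [Hl|Hl];
    [|rewrite bnd_last by auto; lra].
  set (n := pred (length P)).
  assert (Hn : bnd P n = 1) by (apply bnd_last; unfold n; lia).
  assert (alpha P (S j) <= alpha P n).
  { destruct (Nat.eq_dec (S j) n) as [<-|Hne]; [lra|].
    left. apply alpha_increasing; unfold n in *; lia. }
  pose proof (Hab n ltac:(unfold n; lia)). rewrite bnd_alpha by auto. lra.
Qed.

Lemma alpha_X j : (j < length P)%nat -> X (alpha P j).
Proof.
  intros Hj. pose proof (Hab j Hj). pose proof (bnd_le1 j Hj). split; [|lra].
  destruct j; [rewrite H0; lra|]. rewrite <- H0. left. apply alpha_increasing; lia.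
Qed.

Lemma partition_cutset : cutset P.
Proof.
  split; [|split].
  - apply NoDup_nth with (d := 0). intros i j Hi Hj E.
    destruct (Nat.lt_total i j) as [Hl|[He|Hg]]; auto;
      [pose proof (alpha_increasing i j Hl Hj) | pose proof (alpha_increasing j i Hg Hi)];
      unfold alpha in *; lra.
  - rewrite <- H0. apply nth_In; auto.
  - intros c Hc. destruct (In_nth _ _ 0 Hc) as [j [Hj <-]]. apply alpha_X; auto.
Qed.

Lemma next_cut_partition j : (j < length P)%nat -> next_cut P (alpha P j) = bnd P j.
Proof.
  intros Hj. apply next_cut_charact; auto using bnd_le1.
  - apply alpha_X; auto.
  - apply cutset_lt1, partition_cutset.
  - destruct (Nat.lt_ge_cases (S j) (length P)) as [Hl|Hl].
    + right. rewrite bnd_alpha by auto. apply nth_In; auto.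
    + left. apply bnd_last; auto.
  - intros d Hd Hjd. destruct (In_nth _ _ 0 Hd) as [k [Hk <-]]. fold (alpha P k) in *.
    destruct (Nat.lt_ge_cases j k) as [Hl|Hl].
    + destruct (Nat.eq_dec k (S j)) as [->|Hne]; [rewrite bnd_alpha; auto; lra|].
      rewrite bnd_alpha by lia. left. apply alpha_increasing; lia.
    + destruct (Nat.eq_dec j k) as [->|Hne]; [lra|].
      pose proof (alpha_increasing k j ltac:(lia) Hj). lra.
Qed.

Lemma partition_cont_off h :
  (forall j, (j < length P)%nat -> forall x, alpha P j < x < bnd P j -> continuity_pt h x) ->
  cont_off h P.
Proof.
  intros Hc x Hx Hn.
  destruct (cutset_cover P x partition_cutset ltac:(split; lra) Hn) as [d [Hd Hdx]].
  destruct (In_nth _ _ 0 Hd) as [j [Hj Ej]]. fold (alpha P j) in Ej. subst d.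
  rewrite next_cut_partition in Hdx by auto. apply (Hc j); auto.
Qed.

End Partition.

Lemma assoc_partition_cutset h P : assoc_partition h P -> cutset P /\ cont_off h P.
Proof.
  intros (A & B & D & F). split; [apply partition_cutset | apply partition_cont_off]; auto.
Qed.

Lemma nth_map_in {A B} (f : A -> B) l j d d0 : (j < length l)%nat ->
  nth j (map f l) d = f (nth j l d0).
Proof.
  intros. rewrite (nth_indep (map f l) d (f d0)) by (rewrite length_map; auto). apply map_nth.
Qed.

Lemma lookup_combine_map (h f : R -> R) P a : inj_list h P -> In a P ->
  lookup (combine (map h P) (map f P)) (h a) = f a.
Proof.
  induction P as [|p P IH]; simpl; intros Hi Ha; [contradiction|].
  destruct (Req_dec_T (h a) (h p)) as [E|E].
  - assert (a = p) by (apply Hi; simpl; auto). subst; auto.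
  - destruct Ha as [->|Ha]; [congruence|]. apply IH; auto. intros x y Hx Hy; apply Hi; simpl; auto.
Qed.

Lemma odd_inv_count (sigma h : R -> R) P :
  Nat.odd (inv_count sigma (map h P)) = inv_parity h (fun x => sigma (h x)) P.
Proof.
  unfold inv_count, inv_parity. rewrite odd_sum_map.
  rewrite <- (xor_sum2_map P h (fun x y => Rltb x y && Rltb (sigma y) (sigma x))).
  unfold xor_sum2. apply xor_sum_ext. intros x _. rewrite odd_sum_map.
  apply xor_sum_ext. intros y _. unfold Rltb. destruct (Rlt_dec x y), (Rlt_dec (sigma y) (sigma x)); reflexivity.
Qed.

Lemma eps_hP_iff h P b : PCB h -> assoc_partition h P -> (eps_hP h P b <-> b = eps_cut h P).
Proof.
  intros Hh HP. destruct (assoc_partition_cutset h P HP) as [HC HG].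
  destruct HP as (Hlen & H0 & Hab & _).
  assert (Hnext : forall j, (j < length P)%nat ->
            nth j P 0 = alpha P j /\ next_cut P (alpha P j) = bnd P j)
    by (split; [reflexivity | apply next_cut_partition; auto]).
  assert (Hbeta : forall j, (j < length P)%nat ->
            is_inf (img_open h P j) (nth j (map (cut_beta h P) P) 0)).
  { intros j Hj. rewrite (nth_map_in _ _ _ _ 0) by auto. unfold cut_beta.
    destruct (Hnext j Hj) as [-> ->]. apply piece_beta. rewrite <- next_cut_partition by auto.
    apply cutset_piece; auto. apply nth_In; auto. }
  assert (Hdec : forall j, (j < length P)%nat ->
            nth j (map (fun a => decb h a (next_cut P a)) P) false =
            decb h (alpha P j) (bnd P j)).
  { intros j Hj. rewrite (nth_map_in _ _ _ _ 0) by auto. destruct (Hnext j Hj) as [-> ->]; auto. }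
  assert (Hformula : eps_cut h P =
    xorb (Nat.odd (count_occ bool_dec (map (fun a => decb h a (next_cut P a)) P) true))
      (Nat.odd (inv_count (lookup (combine (map h P) (map (cut_beta h P) P))) (map h P)))).
  { unfold eps_cut. rewrite odd_count_occ_true, xor_sum_map, odd_inv_count. f_equal.
    apply inv_parity_ext; auto. intros x Hx. symmetry.
    apply lookup_combine_map; auto using PCB_inj_list. }
  split.
  - intros (betas & decs & Lb & Ld & Hb & Hd & Eb).
    assert (Eb' : betas = map (cut_beta h P) P).
    { apply nth_ext with (d := 0) (d' := 0); [rewrite length_map; auto|].
      intros j Hj. rewrite Lb in Hj. eapply is_inf_unique; [apply Hb | apply Hbeta]; auto. }
    assert (Ed' : decs = map (fun a => decb h a (next_cut P a)) P).
    { apply nth_ext with (d := false) (d' := false); [rewrite length_map; auto|].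
      intros j Hj. rewrite Ld in Hj. rewrite Hdec by auto. specialize (Hd j Hj).
      unfold decb. destruct excluded_middle_informative as [D|D]; [apply Hd; auto|].
      destruct (nth j decs false); auto. exfalso; apply D, Hd; auto. }
    simpl in Eb. rewrite Eb, Eb', Ed'. auto.
  - intros ->. exists (map (cut_beta h P) P), (map (fun a => decb h a (next_cut P a)) P).
    split; [rewrite length_map; auto|]. split; [rewrite length_map; auto|].
    split; [exact Hbeta|]. split; [|exact Hformula].
    intros j Hj. rewrite Hdec by auto. split; [|apply decb_true].
    unfold decb. destruct excluded_middle_informative; auto; discriminate.
Qed.

Module RLeBool <: Orders.TotalLeBool.
  Definition t := R.
  Definition leb (x y : R) : bool := if Rle_dec x y then true else false.
  Lemma leb_total x y : leb x y = true \/ leb y x = true.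
  Proof. unfold leb. destruct (Rle_dec x y), (Rle_dec y x); auto. exfalso; lra. Qed.
End RLeBool.

Module RSort := Sort RLeBool.

Lemma StronglySorted_nth {A} (Rel : A -> A -> Prop) l i k d : StronglySorted Rel l ->
  (i < k)%nat -> (k < length l)%nat -> Rel (nth i l d) (nth k l d).
Proof.
  revert i k. induction l as [|y l IH]; simpl; intros i k H Hik Hk; [lia|].
  inversion H as [|? ? Hl Hy]; subst. destruct k as [|k]; [lia|]. destruct i as [|i].
  - rewrite Forall_forall in Hy. apply Hy, nth_In; lia.
  - apply IH; auto; lia.
Qed.

Lemma sort_increasing C : NoDup C -> forall i k, (i < k)%nat -> (k < length (RSort.sort C))%nat ->
  alpha (RSort.sort C) i < alpha (RSort.sort C) k.
Proof.
  intros ND i k Hik Hk.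
  assert (Hs : StronglySorted (fun x y => RLeBool.leb x y = true) (RSort.sort C)).
  { apply RSort.StronglySorted_sort. intros x y z. unfold RLeBool.leb.
    destruct (Rle_dec x y), (Rle_dec y z), (Rle_dec x z); auto; lra. }
  pose proof (StronglySorted_nth _ _ i k 0 Hs Hik Hk) as Hle. unfold RLeBool.leb in Hle.
  destruct Rle_dec as [[Hlt|He]|]; [exact Hlt | | discriminate]. exfalso.
  apply (Permutation_NoDup (RSort.Permuted_sort C)) in ND.
  assert (i = k) by (apply (proj1 (NoDup_nth _ 0) ND); auto; lia). lia.
Qed.

Lemma increasing_cutset_assoc_partition h P : cutset P -> cont_off h P ->
  (forall i k, (i < k)%nat -> (k < length P)%nat -> alpha P i < alpha P k) -> assoc_partition h P.
Proof.
  intros HC HG Hinc. pose proof HC as (_ & H0 & HX).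
  assert (Hlen : (0 < length P)%nat) by (destruct P; simpl in *; [contradiction | lia]).
  assert (HXj : forall j, (j < length P)%nat -> X (alpha P j)) by (intros; apply HX, nth_In; auto).
  assert (Hbnd : forall j, (j < length P)%nat -> alpha P j < bnd P j /\ bnd P j <= 1).
  { intros j Hj. destruct (Nat.lt_ge_cases (S j) (length P)) as [Hl|Hl].
    - unfold bnd. rewrite (nth_indep P 1 0) by auto. fold (alpha P (S j)).
      split; [apply Hinc; auto | destruct (HXj (S j) Hl); lra].
    - unfold bnd. rewrite nth_overflow by lia. destruct (HXj j Hj). split; lra. }
  split; auto. split; [|split; [apply Hbnd|]].
  - destruct (In_nth _ _ 0 H0) as [[|k] [Hk Ek]]; auto. exfalso.
    pose proof (Hinc 0%nat (S k) ltac:(lia) Hk). destruct (HXj 0%nat); auto. unfold alpha in *. lra.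
  - intros j Hj x Hx. destruct (Hbnd j Hj). destruct (HXj j Hj).
    apply HG; [lra|]. intros HxP. destruct (In_nth _ _ 0 HxP) as [k [Hk Ek]].
    destruct (Nat.lt_ge_cases j k) as [Hjk|Hkj].
    + destruct (Nat.eq_dec k (S j)) as [->|Hne].
      * unfold bnd in Hx. rewrite (nth_indep P 1 0) in Hx by auto. lra.
      * pose proof (Hinc (S j) k ltac:(lia) Hk).
        unfold bnd in Hx. rewrite (nth_indep P 1 0) in Hx by lia. unfold alpha in *. lra.
    + destruct (Nat.eq_dec k j) as [->|Hne]; [unfold alpha in Hx; lra|].
      pose proof (Hinc k j ltac:(lia) Hj). unfold alpha in *. lra.
Qed.

Lemma assoc_partition_exists h : PCB h -> exists P, assoc_partition h P.
Proof.
  intros Hh. destruct (cont_off_exists h Hh) as [C [HC HG]].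
  assert (HI : forall z, In z (RSort.sort C) <-> In z C).
  { intros z. split; apply Permutation_in; [apply Permutation_sym|]; apply RSort.Permuted_sort. }
  exists (RSort.sort C). apply increasing_cutset_assoc_partition.
  - destruct HC as (ND & H0 & HX). split; [|split].
    + apply (Permutation_NoDup (RSort.Permuted_sort C)); auto.
    + apply HI; auto.
    + intros c Hc; apply HX, HI; auto.
  - apply (cont_off_incl h C); auto. intros; apply HI; auto.
  - apply sort_increasing, HC.
Qed.

Lemma min_assoc_partition_exists h : PCB h -> exists P, min_assoc_partition h P.
Proof.
  intros Hh.
  destruct (dec_inh_nat_subset_has_unique_least_element
              (fun n => exists P, assoc_partition h P /\ length P = n) (fun n => classic _))
    as [n [[[P [HP <-]] Hmin] _]].
  { destruct (assoc_partition_exists h Hh) as [P HP]. exists (length P), P; auto. }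
  exists P. split; auto. intros P' HP'. apply Hmin. exists P'; auto.
Qed.

Lemma eps_eq_eps_cut h C : PCB h -> cutset C -> cont_off h C -> eps h = eps_cut h C.
Proof.
  intros Hh HC HG. unfold eps.
  destruct (epsilon_spec (inhabits false)
              (fun b => exists P, min_assoc_partition h P /\ eps_hP h P b))
    as [P [[HP _] He]].
  - destruct (min_assoc_partition_exists h Hh) as [P [HP Hmin]].
    exists (eps_cut h P), P. split; [split; auto|]. apply eps_hP_iff; auto.
  - apply eps_hP_iff in He; auto. rewrite He.
    destruct (assoc_partition_cutset h P HP). apply eps_cut_indep; auto.
Qed.

Lemma cutset_pullback h D : PCB h -> cutset D ->
  exists C, cutset C /\ cont_off h C /\ forall x, X x -> In (h x) D -> In x C.
Proof.
  intros Hh HD.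
  set (hinv := fun y => epsilon (inhabits 0) (fun x => X x /\ h x = y)).
  assert (Hinv : forall y, X y -> X (hinv y) /\ h (hinv y) = y).
  { intros y Hy. apply epsilon_spec, PCB_surj; auto. }
  destruct (cont_off_exists h Hh) as [Ch [HCh GCh]].
  destruct (cutset_extend (map hinv D) Ch HCh) as [C (HC & FC & _)].
  { intros x Hx. apply in_map_iff in Hx as [d [<- Hd]]. apply Hinv, HD; auto. }
  exists C. split; auto. split; [apply (cont_off_incl h Ch); auto; intros; apply FC; auto|].
  intros x Hx Hd. destruct (Hinv (h x)) as [Hix Ehx]; [apply HD; auto|].
  replace x with (hinv (h x)) by (apply (PCB_inj h); auto).
  apply FC. right. apply in_map; auto.
Qed.

(* Cut h at the preimages of the cut points of g: then g o h is continuous off these cuts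
   and the image cut set of h contains the cut points of g. *)
Lemma eps_comp g h : PCB g -> PCB h -> PCB (comp g h) -> eps (comp g h) = xorb (eps g) (eps h).
Proof.
  intros Hg Hh Hgh.
  destruct (cont_off_exists g Hg) as [D [HD GD]].
  destruct (cutset_pullback h D Hh HD) as [C (HC & GC & HDC)].
  assert (HDh : forall d, In d D -> In d (map h C)).
  { intros d Hd. destruct (PCB_surj h d Hh) as [x [Hx <-]]; [apply HD; auto|].
    apply in_map, HDC; auto. }
  assert (HDB : forall d, In d D -> In d (map (cut_beta h C) C))
    by (intros; apply (Permutation_in _ (cut_beta_perm h C Hh HC GC)), HDh; auto).
  assert (HB : cutset (map (cut_beta h C) C)) by (apply cutset_img, HDh, HD; auto).
  assert (GB : cont_off g (map (cut_beta h C) C)) by (apply (cont_off_incl g D); auto).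
  assert (GghC : cont_off (comp g h) C).
  { intros x Hx Hn. pose proof (PCB_X h x Hh ltac:(split; lra)) as HhX.
    assert (Hhx : ~ In (h x) D) by (intros Hd; apply Hn, HDC; auto; split; lra).
    apply continuity_pt_comp; [apply GC; auto|].
    apply GD; auto. split; [|apply HhX]. destruct HhX as [[|E] _]; auto.
    exfalso; apply Hhx. rewrite <- E. apply HD. }
  rewrite (eps_eq_eps_cut _ C Hgh HC GghC), (eps_eq_eps_cut g _ Hg HB GB),
    (eps_eq_eps_cut h C Hh HC GC).
  apply (eps_cut_comp g h C); auto.
Qed.

Lemma not_In_nbhd l x : ~ In x l -> exists d, 0 < d /\ forall y, Rabs (y - x) < d -> ~ In y l.
Proof.
  induction l as [|p l IH]; intros Hn.
  - exists 1. split; [lra|]. intros y _ [].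
  - assert (Hxp : x <> p) by (intro; apply Hn; left; auto).
    destruct IH as [d [Hd Hy]]; [intro; apply Hn; right; auto|].
    exists (Rmin d (Rabs (x - p))). split.
    + apply Rmin_pos; auto. apply Rabs_pos_lt. lra.
    + pose proof (Rmin_l d (Rabs (x - p))). pose proof (Rmin_r d (Rabs (x - p))).
      intros y Hyx [Ey|Hyl]; [subst y|apply (Hy y); auto; lra].
      rewrite <- Rabs_Ropp in Hyx. replace (- (p - x)) with (x - p) in Hyx by ring. lra.
Qed.

Lemma contX_at_fixing f l x : (forall y, ~ In y l -> f y = y) -> ~ In x l -> contX_at f x.
Proof.
  intros Hf Hx eps He. destruct (not_In_nbhd l x Hx) as [d [Hd Hy]].
  exists (Rmin d eps). split; [apply Rmin_pos; auto|].
  intros y _ Hyx. pose proof (Rmin_l d eps). pose proof (Rmin_r d eps).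
  rewrite (Hf y), (Hf x); auto; [lra|]. apply Hy. lra.
Qed.

Lemma swap_X a b x : X a -> X b -> X x -> X (swap a b x).
Proof. intros. unfold swap. destruct (Req_dec_T x a), (Req_dec_T x b); auto. Qed.

Lemma swap_fixes a b y : ~ In y [a; b] -> swap a b y = y.
Proof. intros Hy. apply swap_other; intros ->; apply Hy; simpl; auto. Qed.

Lemma PCB_swap a b : X a -> X b -> PCB (swap a b).
Proof.
  intros Ha Hb. split; [|split; [|split; [|split]]].
  - intros; apply swap_X; auto.
  - intros x y _ _ E. rewrite <- (swap_involutive a b x), <- (swap_involutive a b y), E; auto.
  - intros y Hy. exists (swap a b y). split; [apply swap_X; auto | apply swap_involutive].
  - intros x Hx. apply swap_fixes. intros [<-|[<-|[]]]; auto.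
  - exists [a; b]. intros x _ Hn. apply (contX_at_fixing _ [a; b]); auto using swap_fixes.
Qed.

Lemma Sfin_swap a b : X a -> X b -> Sfin (swap a b).
Proof. intros Ha Hb. split; [apply PCB_swap; auto|]. exists [a; b]. apply swap_fixes. Qed.

Lemma swap_swap a b : comp (swap a b) (swap a b) = idf.
Proof. apply functional_extensionality; intros x. apply swap_involutive. Qed.

Definition swap_prod (ts : list (R * R)) : R -> R :=
  fold_right (fun t acc => comp (swap (fst t) (snd t)) acc) idf ts.

Definition swap_list (ts : list (R * R)) : Prop :=
  forall t, In t ts -> X (fst t) /\ X (snd t) /\ fst t <> snd t.

Lemma beta_identity h a b : a < b -> 0 <= a -> (forall x, a < x < b -> h x = x) -> beta h a b = a.
Proof.
  intros Hab Ha Hid. apply beta_eq; auto; [intros x Hx; rewrite Hid; lra|]. split.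
  - intros y [x [Hx ->]]. rewrite Hid; lra.
  - intros m' Hm'. apply Rnot_lt_le. intros Hlt.
    set (x := (a + Rmin m' b) / 2).
    pose proof (Rmin_l m' b). pose proof (Rmin_r m' b).
    assert (a < Rmin m' b) by (apply Rmin_glb_lt; lra).
    assert (m' <= h x) by (apply Hm'; exists x; split; auto; unfold x; lra).
    rewrite Hid in * by (unfold x; lra). unfold x in *. lra.
Qed.

Lemma decb_identity h a b : a < b -> (forall x, a < x < b -> h x = x) -> decb h a b = false.
Proof.
  intros Hab Hid. apply decb_false, (increasing_not_decreasing h a b); try lra.
  intros x y Hx Hxy Hy. rewrite !Hid; lra.
Qed.

(* With a and b among the cuts, the transposition is the identity on every piece, so the
   only contribution is the signature of the transposition itself. *)
Lemma eps_swap a b : X a -> X b -> a <> b -> eps (swap a b) = true.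
Proof.
  intros Ha Hb Hab.
  destruct (cutset_from_list [a; b]) as [C [HC FC]]; [intros x [<-|[<-|[]]]; auto|].
  assert (HabC : In a C /\ In b C) by (split; apply FC; simpl; auto).
  assert (HG : cont_off (swap a b) C).
  { intros x Hx Hn. apply contX_continuity_pt; auto.
    apply (contX_at_fixing _ [a; b]); auto using swap_fixes.
    intros Hx'. apply Hn, FC; auto. }
  assert (Hid : forall c x, In c C -> c < x < next_cut C c -> swap a b x = x).
  { intros c x Hc Hx. apply swap_fixes.
    intros [<-|[<-|[]]]; [apply (next_cut_gap C c a) | apply (next_cut_gap C c b)]; tauto. }
  assert (Hcn : forall c, In c C -> c < next_cut C c /\ 0 <= c).
  { intros c Hc. destruct (proj2 (proj2 HC) c Hc). split; auto. apply next_cut_gt; auto.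
    apply cutset_lt1; auto. }
  rewrite (eps_eq_eps_cut _ C (PCB_swap a b Ha Hb) HC HG). unfold eps_cut.
  rewrite (xor_sum_ext C _ (fun _ => false)), xor_sum_false; simpl.
  2:{ intros c Hc. destruct (Hcn c Hc). apply decb_identity; eauto. }
  rewrite (inv_parity_ext (swap a b) (swap a b) _ (fun x => swap a b (swap a b x)) C); auto.
  - apply inv_parity_swap; try tauto; [apply HC|].
    intros x y _ _ E. rewrite <- (swap_involutive a b x), <- (swap_involutive a b y), E; auto.
  - intros c Hc. rewrite swap_involutive. destruct (Hcn c Hc). apply beta_identity; eauto.
Qed.

Lemma inv_pair_unique f f1 f2 : inv_pair f f1 -> inv_pair f f2 -> f1 = f2.
Proof.
  intros H1 H2. apply functional_extensionality; intros x.
  rewrite <- (proj1 (H2 x)) at 1. apply H1.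
Qed.

Lemma inv_pair_sym f g : inv_pair f g -> inv_pair g f.
Proof. intros H x. destruct (H x); auto. Qed.

Lemma comp_inv_pair f f' : inv_pair f f' -> comp f f' = idf.
Proof. intros H; apply functional_extensionality; intros x; apply H. Qed.

Definition conjug (g g' k : R -> R) : R -> R := comp g (comp k g').

Lemma conjug_comp g g' k1 k2 : inv_pair g g' ->
  conjug g g' (comp k1 k2) = comp (conjug g g' k1) (conjug g g' k2).
Proof.
  intros Hp. apply functional_extensionality; intros x. unfold conjug, comp.
  rewrite (proj2 (Hp _)). auto.
Qed.

Lemma inv_pair_conjug g g' k k' : inv_pair g g' -> inv_pair k k' ->
  inv_pair (conjug g g' k) (conjug g g' k').
Proof.
  intros Hg Hk x. unfold conjug, comp.
  rewrite (proj2 (Hg (k' (g' x)))), (proj2 (Hg (k (g' x)))), (proj1 (Hk _)), (proj2 (Hk _)).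
  split; apply Hg.
Qed.

Lemma subgroup_inv K f f' : is_subgroup K -> K f -> inv_pair f f' -> K f'.
Proof.
  intros HK Hf Hp. destruct (proj2 (proj2 (proj2 HK)) f Hf) as [f'' [Hf'' Hp'']].
  rewrite (inv_pair_unique f f' f''); auto.
Qed.

Section Subgroup.
Variable Gh : (R -> R) -> Prop.
Hypothesis HG : is_subgroup Gh.

Lemma subgroup_PCB f : Gh f -> PCB f.
Proof. apply HG. Qed.

Lemma subgroup_id : Gh idf.
Proof. apply HG. Qed.

Lemma subgroup_comp f g : Gh f -> Gh g -> Gh (comp f g).
Proof. apply HG. Qed.

Lemma subgroup_conjug g g' k : Gh g -> inv_pair g g' -> Gh k -> Gh (conjug g g' k).
Proof.
  intros Hg Hp Hk. apply subgroup_comp; auto. apply subgroup_comp; auto.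
  apply (subgroup_inv Gh g); auto.
Qed.

Lemma eps_comp_in f g : Gh f -> Gh g -> eps (comp f g) = xorb (eps f) (eps g).
Proof. intros. apply eps_comp; apply subgroup_PCB; auto. apply subgroup_comp; auto. Qed.

Lemma eps_idf : eps idf = false.
Proof.
  pose proof (eps_comp_in idf idf subgroup_id subgroup_id) as E.
  change (comp idf idf) with idf in E.
  destruct (eps idf); simpl in *; auto.
Qed.

Lemma eps_inv_pair f f' : Gh f -> inv_pair f f' -> eps f' = eps f.
Proof.
  intros Hf Hp. pose proof (eps_comp_in f f' Hf (subgroup_inv Gh f f' HG Hf Hp)) as E.
  rewrite comp_inv_pair, eps_idf in E by auto.
  destruct (eps f), (eps f'); simpl in *; congruence.
Qed.

Definition ker_eps (f : R -> R) : Prop := Gh f /\ eps f = false.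

Lemma ker_eps_subgroup : is_subgroup ker_eps.
Proof.
  split; [|split; [|split]].
  - intros f [Hf _]; apply subgroup_PCB; auto.
  - split; [apply subgroup_id | apply eps_idf].
  - intros f g [Hf Ef] [Hg Eg]. split; [apply subgroup_comp; auto|].
    rewrite eps_comp_in, Ef, Eg; auto.
  - intros f [Hf Ef]. destruct (proj2 (proj2 (proj2 HG)) f Hf) as [f' [Hf' Hp]].
    exists f'. split; auto. split; [apply (subgroup_inv Gh f); auto|].
    rewrite (eps_inv_pair f f'); auto.
Qed.

Section Generated.
Variable S : (R -> R) -> Prop.
Hypothesis HS : forall f, S f -> Gh f.

Lemma generated_sub f : generated S f -> Gh f.
Proof. intros H. apply H; auto. Qed.

Lemma generated_incl f : S f -> generated S f.
Proof. intros Hf K HK HSK. auto. Qed.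

Lemma generated_subgroup : is_subgroup (generated S).
Proof.
  split; [|split; [|split]].
  - intros f Hf. apply subgroup_PCB, generated_sub; auto.
  - intros K HK _. apply HK.
  - intros f g Hf Hg K HK HSK. apply HK; [apply Hf | apply Hg]; auto.
  - intros f Hf. destruct (proj2 (proj2 (proj2 HG)) f (generated_sub f Hf)) as [f' [_ Hp]].
    exists f'. split; auto. intros K HK HSK. apply (subgroup_inv K f); auto; apply Hf; auto.
Qed.

Lemma generated_eps f : (forall g, S g -> eps g = false) -> generated S f -> eps f = false.
Proof. intros HSe Hf. apply (Hf ker_eps ker_eps_subgroup). intros g Hg. split; auto. Qed.

Hypothesis S_conjug : forall g g' k, Gh g -> inv_pair g g' -> S k -> S (conjug g g' k).

Lemma generated_conjug g g' k : Gh g -> inv_pair g g' -> generated S k ->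
  generated S (conjug g g' k).
Proof.
  intros Hg Hp Hk.
  (* The k whose conjugate lies in the generated subgroup form a subgroup containing S. *)
  assert (HK : is_subgroup (fun k => Gh k /\ generated S (conjug g g' k))).
  { split; [|split; [|split]].
    - intros f [Hf _]; apply subgroup_PCB; auto.
    - split; [apply subgroup_id|]. change (conjug g g' idf) with (comp g g').
      rewrite comp_inv_pair by auto. apply generated_subgroup.
    - intros f1 f2 [A1 B1] [A2 B2]. split; [apply subgroup_comp; auto|].
      rewrite conjug_comp by auto. apply generated_subgroup; auto.
    - intros f [Hf Bf]. destruct (proj2 (proj2 (proj2 HG)) f Hf) as [f' [Hf' Hp']].
      exists f'. split; auto. split; auto.
      apply (subgroup_inv _ (conjug g g' f) _ generated_subgroup); auto using inv_pair_conjug. }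
  apply (Hk _ HK). intros f Hf. split; [apply HS; auto|]. apply generated_incl, S_conjug; auto.
Qed.

End Generated.
End Subgroup.

(** * Normal subgroups containing the 3-cycles *)

Section Cycle3.
Variables a b c : R.
Hypotheses (Hab : a <> b) (Hbc : b <> c) (Hac : a <> c).

Definition cycle3 : R -> R := comp (swap a b) (swap b c).

Lemma cycle3_order3 : order3 cycle3.
Proof.
  assert (Ea : cycle3 a = b) by (unfold cycle3, comp; rewrite (swap_other b c a), swap_l; auto).
  assert (Eb : cycle3 b = c) by (unfold cycle3, comp; rewrite swap_l; apply swap_other; auto).
  assert (Ec : cycle3 c = a) by (unfold cycle3, comp; rewrite !swap_r; auto).
  split.
  - apply functional_extensionality; intros x. unfold comp at 1 2, idf.
    destruct (Req_dec x a) as [->|Hxa]; [rewrite Ea, Eb, Ec; auto|].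
    destruct (Req_dec x b) as [->|Hxb]; [rewrite Eb, Ec, Ea; auto|].
    destruct (Req_dec x c) as [->|Hxc]; [rewrite Ec, Ea, Eb; auto|].
    assert (Ex : cycle3 x = x)
      by (unfold cycle3, comp; rewrite (swap_other b c x), (swap_other a b x); auto).
    rewrite !Ex; auto.
  - intros E. apply Hab. rewrite <- Ea, E. reflexivity.
Qed.

(* cycle3 has order 3, so it is the square of cycle3 ^ 2 = [(a b), (b c)]. *)
Lemma cycle3_square_square : comp (comp cycle3 cycle3) (comp cycle3 cycle3) = cycle3.
Proof.
  destruct cycle3_order3 as [E _].
  change (comp cycle3 (comp cycle3 (comp cycle3 cycle3)) = cycle3). rewrite E. reflexivity.
Qed.

End Cycle3.

Section OverSfin.
Variable Gh : (R -> R) -> Prop.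
Hypothesis HG : is_subgroup Gh.
Hypothesis HSfin : forall f, Sfin f -> Gh f.

Lemma Sfin_idf : Sfin idf.
Proof. split; [apply (subgroup_PCB Gh HG), subgroup_id; auto|]. exists []. auto. Qed.

Lemma Sfin_comp s1 s2 : Sfin s1 -> Sfin s2 -> Sfin (comp s1 s2).
Proof.
  intros H1 H2. split; [apply (subgroup_PCB Gh HG), subgroup_comp; auto|].
  destruct H1 as [_ [l1 F1]], H2 as [_ [l2 F2]]. exists (l1 ++ l2).
  intros x Hx. unfold comp. rewrite F2, F1; auto; intro; apply Hx, in_or_app; auto.
Qed.

Lemma Sfin_conjug g g' s : Gh g -> inv_pair g g' -> Sfin s -> Sfin (conjug g g' s).
Proof.
  intros Hg Hp Hs. split; [apply (subgroup_PCB Gh HG), subgroup_conjug; auto|].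
  destruct Hs as [_ [l F]]. exists (map g l). intros x Hx. unfold conjug, comp.
  rewrite F; [apply Hp|]. intro Hin. apply Hx. rewrite <- (proj1 (Hp x)). apply in_map; auto.
Qed.

Lemma Sfin_inv s s' : Sfin s -> inv_pair s s' -> Sfin s'.
Proof.
  intros Hs Hp. split; [apply (subgroup_PCB Gh HG), (subgroup_inv Gh s); auto|].
  destruct Hs as [_ [l F]]. exists l. intros x Hx. rewrite <- (F x Hx) at 1. apply Hp.
Qed.

Lemma subgroup_swap a b : X a -> X b -> Gh (swap a b).
Proof. intros. apply HSfin, Sfin_swap; auto. Qed.

Lemma finite_support_swap_prod l s : Gh s -> (forall x, ~ In x l -> s x = x) ->
  exists ts, swap_list ts /\ s = swap_prod ts.
Proof.
  revert s. induction l as [|a l IH]; intros s Hs Hf.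
  { exists []. split; [intros t []|]. apply functional_extensionality; intros x. apply Hf. auto. }
  pose proof (subgroup_PCB Gh HG s Hs) as Ps.
  destruct (Req_dec (s a) a) as [Ea|Ea].
  { apply IH; auto. intros x Hx. destruct (Req_dec x a) as [->|Hxa]; auto.
    apply Hf. intros [E|E]; auto. }
  assert (HaX : X a) by (apply NNPP; intros Hn; apply Ea; apply Ps; auto).
  assert (HbX : X (s a)) by (apply PCB_X; auto).
  destruct (IH (comp (swap a (s a)) s)) as [ts [V E]].
  - apply subgroup_comp; auto. apply subgroup_swap; auto.
  - intros x Hx. unfold comp. destruct (Req_dec x a) as [->|Hxa]; [apply swap_r|].
    assert (Hsx : s x = x) by (apply Hf; intros [E|E]; auto).
    rewrite Hsx. apply swap_other; auto. intros Exa. apply Hxa.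
    apply (PCB_inj s); auto; [rewrite Exa; auto | congruence].
  - exists ((a, s a) :: ts). split.
    + intros t [<-|Ht]; [simpl; auto | apply V; auto].
    + simpl. rewrite <- E. apply functional_extensionality; intros x. unfold comp.
      rewrite swap_involutive. auto.
Qed.

Lemma swap_prod_eps ts : swap_list ts ->
  Gh (swap_prod ts) /\ eps (swap_prod ts) = Nat.odd (length ts).
Proof.
  induction ts as [|t ts IH]; intros V.
  - simpl. split; [apply subgroup_id | apply (eps_idf Gh)]; auto.
  - destruct (V t (or_introl eq_refl)) as (A & B & D).
    destruct IH as [IG IE]; [intros u Hu; apply V; right; auto|].
    assert (Gt : Gh (swap (fst t) (snd t))) by (apply subgroup_swap; auto).
    simpl. split; [apply subgroup_comp; auto|].
    rewrite (eps_comp_in Gh HG), IE, eps_swap by auto. rewrite Nat.odd_succ, <- Nat.negb_odd. auto.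
Qed.

Section NormalKer.
Variable H : (R -> R) -> Prop.
Hypothesis HH : is_subgroup H.
Hypothesis H_sub : forall f, H f -> Gh f.
Hypothesis H_conjug : forall g g' k, Gh g -> inv_pair g g' -> H k -> H (conjug g g' k).
Hypothesis H_eps : forall f, H f -> eps f = false.
Hypothesis H_cycle3 : forall a b c, X a -> X b -> X c -> a <> b -> b <> c -> a <> c ->
  H (cycle3 a b c).
Hypothesis H_notSfin : exists k, H k /\ ~ Sfin k.
Hypothesis G_simple : forall N, normal_in N Gh -> (forall f, Sfin f -> N f) ->
  (forall f, N f <-> Sfin f) \/ (forall f, N f <-> Gh f).

(* (a b)(c d) = (a b)(b c) . (b c)(c d) when b <> c; the other cases are 3-cycles or trivial. *)
Lemma H_swap_pair a b c d : X a -> X b -> X c -> X d -> a <> b -> c <> d ->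
  H (comp (swap a b) (swap c d)).
Proof.
  intros Ha Hb Hc Hd Hab Hcd.
  pose proof HH as (_ & H1 & Hcomp & _).
  destruct (Req_dec b c) as [<-|Hbc].
  { destruct (Req_dec a d) as [<-|Had]; [rewrite (swap_comm b a), swap_swap|apply H_cycle3]; auto. }
  destruct (Req_dec a c) as [<-|Hac].
  { destruct (Req_dec b d) as [<-|Hbd]; [rewrite swap_swap; auto|].
    rewrite (swap_comm a b). apply H_cycle3; auto. }
  destruct (Req_dec b d) as [<-|Hbd]; [rewrite (swap_comm c b); apply H_cycle3; auto|].
  destruct (Req_dec a d) as [<-|Had].
  { rewrite (swap_comm a b), (swap_comm c a). apply H_cycle3; auto. }
  replace (comp (swap a b) (swap c d))
    with (comp (comp (swap a b) (swap b c)) (comp (swap b c) (swap c d))).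
  - apply Hcomp; apply H_cycle3; auto.
  - change (comp (swap a b) (comp (comp (swap b c) (swap b c)) (swap c d))
            = comp (swap a b) (swap c d)).
    rewrite swap_swap. reflexivity.
Qed.

Lemma H_even_swap_prod ts : swap_list ts -> Nat.odd (length ts) = false -> H (swap_prod ts).
Proof.
  induction ts as [[|t2 ts] IH] using (induction_ltof1 _ (@length _)); intros V Ho.
  - apply HH.
  - destruct ts as [|t3 ts]; [discriminate|].
    destruct (V t2 (or_introl eq_refl)) as (A1 & B1 & D1).
    destruct (V t3 (or_intror (or_introl eq_refl))) as (A2 & B2 & D2).
    change (H (comp (comp (swap (fst t2) (snd t2)) (swap (fst t3) (snd t3))) (swap_prod ts))).
    apply HH; [apply H_swap_pair; auto|].
    apply IH; [unfold ltof; simpl; lia | intros u Hu; apply V; right; right; auto |].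
    simpl in Ho. rewrite Nat.odd_succ, Nat.even_succ in Ho. auto.
Qed.

Definition H_Sfin (f : R -> R) : Prop := Gh f /\ exists k s, H k /\ Sfin s /\ f = comp k s.

Lemma H_Sfin_normal : normal_in H_Sfin Gh.
Proof.
  pose proof HH as (_ & H1 & Hcomp & Hinv).
  split; [split; [|split; [|split]] | split].
  - intros f [Hf _]. apply (subgroup_PCB Gh HG); auto.
  - split; [apply (subgroup_id Gh HG)|]. exists idf, idf. split; [|split]; auto using Sfin_idf.
  - intros f1 f2 [A1 [k1 [s1 (K1 & S1 & ->)]]] [A2 [k2 [s2 (K2 & S2 & ->)]]].
    split; [apply subgroup_comp; auto|].
    destruct (Hinv k2 K2) as [k2' [K2' P2]].
    exists (comp k1 k2), (comp (conjug k2' k2 s1) s2). split; [|split]; auto.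
    + apply Sfin_comp; auto. apply Sfin_conjug; auto using inv_pair_sym.
    + apply functional_extensionality; intros x. unfold conjug, comp. rewrite (proj1 (P2 _)). auto.
  - intros f [A [k [s (K & S & ->)]]].
    destruct (Hinv k K) as [k' [K' P]].
    destruct (proj2 (proj2 (proj2 HG)) s (HSfin s S)) as [s' [S' Ps]].
    exists (comp s' k'). split.
    + split; [apply subgroup_comp; auto|].
      exists k', (conjug k k' s'). split; [|split]; auto.
      * apply Sfin_conjug, (Sfin_inv s); auto.
      * apply functional_extensionality; intros x. unfold conjug, comp. rewrite (proj2 (P _)). auto.
    + intros x. unfold comp. rewrite (proj1 (Ps _)), (proj2 (P _)). split; [apply P | apply Ps].
  - intros f [A _]; auto.
  - intros g g' n Hg Hp [A [k [s (K & S & ->)]]].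
    split; [apply (subgroup_conjug Gh HG); auto|].
    exists (conjug g g' k), (conjug g g' s). split; [|split]; auto using Sfin_conjug.
    apply conjug_comp; auto.
Qed.

(* H S_fin is normal and strictly contains S_fin, so it is all of Gh; the S_fin-part of an
   element of the kernel is then an even permutation, hence a product of pairs of
   transpositions, all of which lie in H. *)
Lemma normal_eq_ker_eps f : H f <-> Gh f /\ eps f = false.
Proof.
  split; [intros Hf; split; auto|]. intros [Gf Ef].
  destruct (G_simple H_Sfin H_Sfin_normal) as [Hc|Hc].
  - intros s Hs. split; auto. exists idf, s. split; [apply HH | split; auto].
  - exfalso. destruct H_notSfin as [k [Hk Hn]]. apply Hn, Hc. split; auto.
    exists k, idf. split; [|split]; auto using Sfin_idf.
  - destruct (proj2 (Hc f) Gf) as [_ [k [s (K & S & ->)]]].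
    rewrite (eps_comp_in Gh HG), H_eps in Ef by auto. simpl in Ef.
    pose proof S as [_ [l Fl]].
    destruct (finite_support_swap_prod l s (HSfin s S) Fl) as [ts [V ->]].
    apply HH; auto. apply H_even_swap_prod; auto.
    destruct (swap_prod_eps ts V) as [_ E]. rewrite <- E. auto.
Qed.

End NormalKer.
End OverSfin.

Lemma order3_conjug g g' k : inv_pair g g' -> order3 k -> order3 (conjug g g' k).
Proof.
  intros Hp [Ok Nk]. split.
  - rewrite <- !conjug_comp by auto. rewrite Ok. apply (comp_inv_pair g g'); auto.
  - intros E. apply Nk. apply functional_extensionality; intros x.
    pose proof (equal_f E (g x)) as Ex. unfold conjug, comp, idf in Ex.
    rewrite (proj2 (Hp x)) in Ex. rewrite <- (proj2 (Hp (k x))), Ex. apply Hp.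
Qed.

Lemma commutator_of_conjug Gh g g' c : is_subgroup Gh -> Gh g -> inv_pair g g' ->
  commutator_of Gh c -> commutator_of Gh (conjug g g' c).
Proof.
  intros HG Hg Hp (a & a' & k & k' & Ha & Hk & Pa & Pk & ->).
  exists (conjug g g' a), (conjug g g' a'), (conjug g g' k), (conjug g g' k').
  split; [apply subgroup_conjug; auto|]. split; [apply subgroup_conjug; auto|].
  split; [apply inv_pair_conjug; auto|]. split; [apply inv_pair_conjug; auto|].
  rewrite !conjug_comp by auto. reflexivity.
Qed.

Section Corollary.
Variable Gh : (R -> R) -> Prop.
Hypothesis HG : is_subgroup Gh.
Hypothesis HSfin : forall f, Sfin f -> Gh f.
Hypothesis G_simple : forall N, normal_in N Gh -> (forall f, Sfin f -> N f) ->
  (forall f, N f <-> Sfin f) \/ (forall f, N f <-> Gh f).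

Lemma subgroup_cycle3 a b c : X a -> X b -> X c -> Gh (cycle3 a b c).
Proof. intros. apply (subgroup_comp Gh HG); apply subgroup_swap; auto. Qed.

Lemma order3_eps f : Gh f -> order3 f -> eps f = false.
Proof.
  intros Hf [Of _]. pose proof (eps_idf Gh HG) as E. rewrite <- Of in E.
  rewrite !(eps_comp_in Gh HG) in E by (try apply subgroup_comp; auto).
  destruct (eps f); auto.
Qed.

Lemma commutator_eps c : commutator_of Gh c -> eps c = false.
Proof.
  intros (a & a' & k & k' & Ha & Hk & Pa & Pk & ->).
  assert (Ga' : Gh a') by (apply (subgroup_inv Gh a); auto).
  assert (Gk' : Gh k') by (apply (subgroup_inv Gh k); auto).
  rewrite !(eps_comp_in Gh HG) by (repeat apply subgroup_comp; auto).
  rewrite (eps_inv_pair Gh HG a a'), (eps_inv_pair Gh HG k k') by auto.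
  destruct (eps a), (eps k); auto.
Qed.

Lemma J3_eq_ker_eps : (exists f, Gh f /\ ~ Sfin f /\ order3 f) ->
  forall f, J3 Gh f <-> Gh f /\ eps f = false.
Proof.
  intros [f0 (Gf0 & Sf0 & Of0)].
  set (S3 := fun f => Gh f /\ order3 f).
  assert (HS3 : forall f, S3 f -> Gh f) by (intros g [A _]; auto).
  apply (normal_eq_ker_eps Gh HG HSfin (J3 Gh)).
  - apply (generated_subgroup Gh HG S3 HS3).
  - apply (generated_sub Gh HG S3 HS3).
  - apply (generated_conjug Gh HG S3 HS3).
    intros g g' k Hg Hp [Hk Ok]. split; [apply subgroup_conjug|apply order3_conjug]; auto.
  - intros f Hf. apply (generated_eps Gh HG S3); auto. intros g [Hg Og]. apply order3_eps; auto.
  - intros a b c Ha Hb Hc Hab Hbc Hac. apply generated_incl. split; [apply subgroup_cycle3; auto|].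
    apply cycle3_order3; auto.
  - exists f0. split; auto. apply generated_incl. split; auto.
  - auto.
Qed.

Lemma D_eq_ker_eps : (exists c, commutator_of Gh c /\ ~ Sfin c) ->
  forall f, D Gh f <-> Gh f /\ eps f = false.
Proof.
  intros [c0 [Hc0 Sc0]].
  assert (HSC : forall f, commutator_of Gh f -> Gh f).
  { intros g (a & a' & k & k' & Ha & Hk & Pa & Pk & ->).
    repeat apply subgroup_comp; auto;
      [apply (subgroup_inv Gh a) | apply (subgroup_inv Gh k)]; auto. }
  pose proof (generated_subgroup Gh HG _ HSC) as HD.
  apply (normal_eq_ker_eps Gh HG HSfin (D Gh)); auto.
  - apply (generated_sub Gh HG _ HSC).
  - apply (generated_conjug Gh HG _ HSC). intros; apply commutator_of_conjug; auto.
  - intros f Hf. apply (generated_eps Gh HG _ HSC); auto using commutator_eps.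
  - intros a b c Ha Hb Hc Hab Hbc Hac.
    change (D Gh (cycle3 a b c)). rewrite <- (cycle3_square_square a b c) by auto.
    assert (Hcomm : commutator_of Gh (comp (cycle3 a b c) (cycle3 a b c))).
    { exists (swap a b), (swap a b), (swap b c), (swap b c).
      split; [apply subgroup_swap; auto|]. split; [apply subgroup_swap; auto|].
      split; [intros x; split; apply swap_involutive|].
      split; [intros x; split; apply swap_involutive | reflexivity]. }
    apply HD; apply generated_incl; auto.
  - exists c0. split; auto. apply generated_incl; auto.
Qed.

End Corollary.

Theorem corollary4p4 (Gh : (R -> R) -> Prop) :
  is_subgroup Gh ->
  (forall f, Sfin f -> Gh f) ->
  (* the image G = Gh / S_fin is simple: nontrivial, and no normal subgroup
     strictly between S_fin and Gh (correspondence theorem) *)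
  (exists f, Gh f /\ ~ Sfin f) ->
  (forall N, normal_in N Gh -> (forall f, Sfin f -> N f) ->
     (forall f, N f <-> Sfin f) \/ (forall f, N f <-> Gh f)) ->
  (* G is nonabelian *)
  (exists c, commutator_of Gh c /\ ~ Sfin c) ->
  (exists f, Gh f /\ ~ Sfin f /\ order3 f) ->
  forall f, (J3 Gh f <-> (Gh f /\ eps f = false)) /\ (D Gh f <-> J3 Gh f).
Proof.
  (* G nontrivial already follows from G nonabelian. *)
  intros HG HSfin _ G_simple Hcomm Hord3 f.
  pose proof (J3_eq_ker_eps Gh HG HSfin G_simple Hord3) as EJ.
  pose proof (D_eq_ker_eps Gh HG HSfin G_simple Hcomm) as ED.
  split; [apply EJ | rewrite ED, EJ; tauto].
Qed.
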